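(* For every $r, d \ge 0$, the first-order theory of $\mathrm{TM}_r(d)$ equals the first-order theory of $\mathrm{TM}^{\mathrm{fin}}_r(d)$, and the MSO theory of $\mathrm{TM}_r(d)$ equals the MSO theory of $\mathrm{TM}^{\mathrm{fin}}_r(d)$.
   Context: Graphs are simple undirected graphs of arbitrary cardinality. A tree model of $r$ labels and height $d$ is a pair $(t,S)$ where $t$ is an $(r+1)$-labeled rooted tree (a tree with a distinguished root whose nodes are partitioned into label classes $P_1,\dots,P_{r+1}$, possibly infinite) and $S \subseteq [r]^2\times[d]$ such that: every root-to-leaf path has length exactly $d$; leaves are labeled from $[r]$ and internal nodes with $r+1$; $(i,j,l)\in S$ iff $(j,i,l)\in S$. It is a tree model of the graph whose vertices are the leaves of $t$, two leaves with labels $i,j$ at distance $2l$ in $t$ being adjacent iff $(i,j,l)\in S$. $\mathrm{TM}_r(d)$ is the class of all graphs isomorphic to a graph having such a tree model, and $\mathrm{TM}^{\mathrm{fin}}_r(d)$ is the class of finite graphs in $\mathrm{TM}_r(d)$. For a logic $\mathcal{L}\in\{\mathrm{FO},\mathrm{MSO}\}$ and a class $\mathcal{C}$ of graphs, the $\mathcal{L}$ theory of $\mathcal{C}$ is the set of all $\mathcal{L}$ sentences (over the vocabulary $\{E\}$) true in every graph of $\mathcal{C}$. *)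

From Stdlib Require Import List Arith.
Import ListNotations.

Record graph := Graph { gV : Type; gE : gV -> gV -> Prop }.

Definition simple_graph (G : graph) : Prop :=
  (forall x y : gV G, gE G x y -> gE G y x) /\ (forall x : gV G, ~ gE G x x).

Definition graph_iso (G H : graph) : Prop :=
  exists (f : gV G -> gV H) (g : gV H -> gV G),
    (forall x, g (f x) = x) /\ (forall y, f (g y) = y) /\
    (forall x y, gE G x y <-> gE H (f x) (f y)).

Definition finite_graph (G : graph) : Prop :=
  exists l : list (gV G), forall x, In x l.

Definition graph_class := graph -> Prop.

Record rtree := RTree {
  tnode : Type;
  troot : tnode;
  tpar : tnode -> tnode;
  tdepth : tnode -> nat;
  tpar_root : tpar troot = troot;
  tdepth_root : tdepth troot = 0;
  tdepth_par : forall x, x <> troot -> S (tdepth (tpar x)) = tdepth x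
}.

Definition tedge (t : rtree) (x y : tnode t) : Prop :=
  (x <> troot t /\ y = tpar t x) \/ (y <> troot t /\ x = tpar t y).

Inductive twalk (t : rtree) : tnode t -> tnode t -> nat -> Prop :=
| twalk_nil : forall x, twalk t x x 0
| twalk_cons : forall x y z n, tedge t x y -> twalk t y z n -> twalk t x z (S n).

Definition tdist (t : rtree) (u v : tnode t) (n : nat) : Prop :=
  twalk t u v n /\ forall m, twalk t u v m -> n <= m.

Definition is_leaf (t : rtree) (x : tnode t) : Prop :=
  forall y, y <> troot t -> tpar t y <> x.

(* [r] = {1,...,r}; label r+1 is the label of internal nodes.
   S is given as a relation on nat^3 contained in [r]^2 x [d]. *)
Record tree_model (r d : nat) := TreeModel {
  tm_tree : rtree;
  tm_lab : tnode tm_tree -> nat;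
  tm_S : nat -> nat -> nat -> Prop;
  tm_depth_le : forall x, tdepth tm_tree x <= d;
  tm_leaf_depth : forall x, is_leaf tm_tree x -> tdepth tm_tree x = d;
  tm_lab_leaf : forall x, is_leaf tm_tree x -> 1 <= tm_lab x <= r;
  tm_lab_internal : forall x, ~ is_leaf tm_tree x -> tm_lab x = S r;
  tm_S_range : forall i j l, tm_S i j l ->
      (1 <= i <= r) /\ (1 <= j <= r) /\ (1 <= l <= d);
  tm_S_sym : forall i j l, tm_S i j l <-> tm_S j i l
}.

Arguments tm_tree {r d}.
Arguments tm_lab {r d}.
Arguments tm_S {r d}.

Definition tm_graph {r d : nat} (M : tree_model r d) : graph :=
  Graph {x : tnode (tm_tree M) | is_leaf (tm_tree M) x}
        (fun u v => exists l, tdist (tm_tree M) (proj1_sig u) (proj1_sig v) (2 * l)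
                      /\ tm_S M (tm_lab M (proj1_sig u)) (tm_lab M (proj1_sig v)) l).

Definition TM (r d : nat) : graph_class :=
  fun G => simple_graph G /\ exists M : tree_model r d, graph_iso (tm_graph M) G.

Definition TMfin (r d : nat) : graph_class :=
  fun G => TM r d G /\ finite_graph G.

Inductive fo : Type :=
| FEq  : nat -> nat -> fo
| FAdj : nat -> nat -> fo
| FTrue : fo
| FFalse : fo
| FNot : fo -> fo
| FAnd : fo -> fo -> fo
| FOr  : fo -> fo -> fo
| FImp : fo -> fo -> fo
| FEx  : nat -> fo -> fo
| FAll : nat -> fo -> fo.

Fixpoint fo_wf (Γ : list nat) (φ : fo) : Prop :=
  match φ with
  | FEq x y | FAdj x y => In x Γ /\ In y Γ
  | FTrue | FFalse => True
  | FNot a => fo_wf Γ a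
  | FAnd a b | FOr a b | FImp a b => fo_wf Γ a /\ fo_wf Γ b
  | FEx x a | FAll x a => fo_wf (x :: Γ) a
  end.

Definition fo_sentence (φ : fo) : Prop := fo_wf [] φ.

Definition upd {A : Type} (ρ : nat -> option A) (x : nat) (a : A) : nat -> option A :=
  fun y => if Nat.eqb y x then Some a else ρ y.

Definition atom2 {V : Type} (P : V -> V -> Prop) (ρ : nat -> option V) (x y : nat) : Prop :=
  match ρ x, ρ y with Some a, Some b => P a b | _, _ => False end.

Fixpoint fo_sat (G : graph) (ρ : nat -> option (gV G)) (φ : fo) : Prop :=
  match φ with
  | FEq x y => atom2 (@eq (gV G)) ρ x y
  | FAdj x y => atom2 (gE G) ρ x y
  | FTrue => True
  | FFalse => False
  | FNot a => ~ fo_sat G ρ a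
  | FAnd a b => fo_sat G ρ a /\ fo_sat G ρ b
  | FOr a b => fo_sat G ρ a \/ fo_sat G ρ b
  | FImp a b => fo_sat G ρ a -> fo_sat G ρ b
  | FEx x a => exists v : gV G, fo_sat G (upd ρ x v) a
  | FAll x a => forall v : gV G, fo_sat G (upd ρ x v) a
  end.

Definition fo_models (G : graph) (φ : fo) : Prop := fo_sat G (fun _ => None) φ.

Definition FO_theory (C : graph_class) : fo -> Prop :=
  fun φ => fo_sentence φ /\ forall G, C G -> fo_models G φ.

Inductive mso : Type :=
| MEq  : nat -> nat -> mso
| MAdj : nat -> nat -> mso
| MIn  : nat -> nat -> mso            (* MIn x X : element variable x in set variable X *)
| MTrue : mso
| MFalse : mso
| MNot : mso -> mso
| MAnd : mso -> mso -> mso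
| MOr  : mso -> mso -> mso
| MImp : mso -> mso -> mso
| MEx  : nat -> mso -> mso
| MAll : nat -> mso -> mso
| MExS : nat -> mso -> mso
| MAllS : nat -> mso -> mso.

Fixpoint mso_wf (Γ Δ : list nat) (φ : mso) : Prop :=
  match φ with
  | MEq x y | MAdj x y => In x Γ /\ In y Γ
  | MIn x X => In x Γ /\ In X Δ
  | MTrue | MFalse => True
  | MNot a => mso_wf Γ Δ a
  | MAnd a b | MOr a b | MImp a b => mso_wf Γ Δ a /\ mso_wf Γ Δ b
  | MEx x a | MAll x a => mso_wf (x :: Γ) Δ a
  | MExS X a | MAllS X a => mso_wf Γ (X :: Δ) a
  end.

Definition mso_sentence (φ : mso) : Prop := mso_wf [] [] φ.

Definition supd {A : Type} (σ : nat -> A -> Prop) (X : nat) (P : A -> Prop)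
  : nat -> A -> Prop :=
  fun Y => if Nat.eqb Y X then P else σ Y.

Fixpoint mso_sat (G : graph) (ρ : nat -> option (gV G)) (σ : nat -> gV G -> Prop)
    (φ : mso) : Prop :=
  match φ with
  | MEq x y => atom2 (@eq (gV G)) ρ x y
  | MAdj x y => atom2 (gE G) ρ x y
  | MIn x X => match ρ x with Some a => σ X a | None => False end
  | MTrue => True
  | MFalse => False
  | MNot a => ~ mso_sat G ρ σ a
  | MAnd a b => mso_sat G ρ σ a /\ mso_sat G ρ σ b
  | MOr a b => mso_sat G ρ σ a \/ mso_sat G ρ σ b
  | MImp a b => mso_sat G ρ σ a -> mso_sat G ρ σ b
  | MEx x a => exists v : gV G, mso_sat G (upd ρ x v) σ a
  | MAll x a => forall v : gV G, mso_sat G (upd ρ x v) σ a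
  | MExS X a => exists P : gV G -> Prop, mso_sat G ρ (supd σ X P) a
  | MAllS X a => forall P : gV G -> Prop, mso_sat G ρ (supd σ X P) a
  end.

Definition mso_models (G : graph) (φ : mso) : Prop :=
  mso_sat G (fun _ => None) (fun _ _ => False) φ.

Definition MSO_theory (C : graph_class) : mso -> Prop :=
  fun φ => mso_sentence φ /\ forall G, C G -> mso_models G φ.

(** Every tree model is MSO-equivalent, up to a given quantifier rank, to a
    finite one.  Attach to each node its threshold type: the labels of the
    leaves below it (plus the values of free variables) summarised bottom-up,
    a node's type recording for every possible child type how many children
    have it, counted up to a threshold [t].  A back-and-forth argument shows
    that two tree models whose roots have the same type, for a threshold
    depending on the rank, satisfy the same MSO formulas of that rank:
    choosing a leaf or a set of leaves refines the decoration, and equal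
    truncated counts let the children be matched so that the refined types
    still agree for a smaller threshold.  Keeping, for every type, only as many
    children as its truncated count gives a finite tree model with the same
    root type.  Hence an MSO sentence true in all finite graphs of [TM r d] is
    true in all of [TM r d], and FO is the fragment without set quantifiers. *)

From Stdlib Require Import List Arith Lia ClassicalEpsilon ProofIrrelevance Classical.
Import ListNotations.

(** * Counting up to a threshold *)

Definition indicator (P : Prop) : nat := if excluded_middle_informative P then 1 else 0.

Lemma indicator_le1 P : indicator P <= 1.
Proof. unfold indicator; destruct excluded_middle_informative; lia. Qed.

Lemma indicator_eq1 P : indicator P = 1 <-> P.
Proof. unfold indicator; destruct excluded_middle_informative; split; intros; try lia; tauto. Qed.

Lemma indicator_false (P : Prop) : ~ P -> indicator P = 0.
Proof. intros H; unfold indicator; destruct excluded_middle_informative; tauto. Qed.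

Lemma indicator_ext P Q : (P <-> Q) -> indicator P = indicator Q.
Proof. intros H; unfold indicator; do 2 destruct excluded_middle_informative; tauto. Qed.

Definition atleast {X} (m : nat) (P : X -> Prop) :=
  exists l, NoDup l /\ length l = m /\ forall x, In x l -> P x.

Fixpoint tcount {X} (t : nat) (P : X -> Prop) : nat :=
  match t with
  | 0 => 0
  | S t' => if excluded_middle_informative (atleast (S t') P) then S t' else tcount t' P
  end.

Lemma NoDup_firstn {X} (l : list X) k : NoDup l -> NoDup (firstn k l).
Proof. intro H. rewrite <- (firstn_skipn k l) in H. eapply NoDup_app_remove_r; eauto. Qed.

Lemma NoDup_skipn {X} (l : list X) k : NoDup l -> NoDup (skipn k l).
Proof. intro H. rewrite <- (firstn_skipn k l) in H. eapply NoDup_app_remove_l; eauto. Qed.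

Lemma in_firstn {X} (l : list X) k x : In x (firstn k l) -> In x l.
Proof. intro H. rewrite <- (firstn_skipn k l). apply in_or_app; auto. Qed.

Lemma in_skipn {X} (l : list X) k x : In x (skipn k l) -> In x l.
Proof. intro H. rewrite <- (firstn_skipn k l). apply in_or_app; auto. Qed.

Lemma atleast_0 {X} (P : X -> Prop) : atleast 0 P.
Proof. exists []; repeat split; simpl; auto; [constructor | tauto]. Qed.

Lemma atleast_le {X} (P : X -> Prop) m k : atleast m P -> k <= m -> atleast k P.
Proof.
  intros (l & Hn & Hl & Hp) Hk. exists (firstn k l). split; [apply NoDup_firstn; auto|].
  split; [rewrite length_firstn; lia|]. intros x Hx; apply Hp; eapply in_firstn; eauto.
Qed.

Lemma atleast_imp {X} (P Q : X -> Prop) m :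
  (forall x, P x -> Q x) -> atleast m P -> atleast m Q.
Proof. intros H (l & ? & ? & ?); exists l; eauto. Qed.

Lemma atleast1 {X} (P : X -> Prop) : atleast 1 P <-> exists x, P x.
Proof.
  split.
  - intros ([|x l] & _ & Hl & Hp); simpl in Hl; [lia|]. exists x; apply Hp; simpl; auto.
  - intros [x Hx]; exists [x]; split; [repeat constructor; simpl; tauto|]. split; auto.
    intros y [<-|[]]; auto.
Qed.

Lemma atleast2 {X} (P : X -> Prop) x y : P x -> P y -> x <> y -> atleast 2 P.
Proof.
  intros. exists [x; y]. split; [repeat constructor; simpl; intuition|].
  split; auto. intros z [<-|[<-|[]]]; auto.
Qed.

Lemma atleast2_inv {X} (P : X -> Prop) : atleast 2 P -> exists x y, P x /\ P y /\ x <> y.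
Proof.
  intros ([|x [|y [|]]] & Hn & Hl & Hp); simpl in Hl; try lia.
  exists x, y. inversion Hn; subst. simpl in *. split; [auto|]. split; [auto|]. intros ->; auto.
Qed.

Lemma atleast_list {X} (P : X -> Prop) l m : NoDup l -> (forall x, P x <-> In x l) ->
  (atleast m P <-> m <= length l).
Proof.
  intros Hn Hl; split.
  - intros (l' & Hn' & Hl' & Hp'). subst. apply NoDup_incl_length; auto.
    intros x Hx; apply Hl; auto.
  - intros Hm. apply atleast_le with (length l); auto. exists l; repeat split; auto.
    intros; apply Hl; auto.
Qed.

Lemma NoDup_map_on {X Y} (g : X -> Y) l : NoDup l ->
  (forall x y, In x l -> In y l -> g x = g y -> x = y) -> NoDup (map g l).
Proof.
  induction l as [|a l IH]; simpl; intros Hn Hi; constructor.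
  - inversion Hn; subst. intros Hin. apply in_map_iff in Hin as (y & Hy & Hyl).
    assert (y = a) by (apply Hi; auto). subst; tauto.
  - inversion Hn; subst. apply IH; auto.
Qed.

Lemma atleast_inj {X Y} (Q : Y -> Prop) (P : X -> Prop) (g : Y -> X) m :
  (forall y, Q y -> P (g y)) -> (forall y y', Q y -> Q y' -> g y = g y' -> y = y') ->
  atleast m Q -> atleast m P.
Proof.
  intros Hm Hi (l & Hn & Hl & Hq). exists (map g l). split.
  - apply NoDup_map_on; auto.
  - rewrite length_map; split; auto. intros x Hx. apply in_map_iff in Hx as (y & <- & Hy); auto.
Qed.

Lemma atleast_surj {X Y} (Q : Y -> Prop) (P : X -> Prop) (g : Y -> X) m :
  (forall x, P x -> exists y, Q y /\ g y = x) -> atleast m P -> atleast m Q.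
Proof.
  intros Hs (l & Hn & Hl & Hp). subst m.
  assert (exists l', map g l' = l /\ forall y, In y l' -> Q y) as (l' & Hl' & Hq).
  { clear Hn. induction l as [|a l IH].
    - exists []; simpl; tauto.
    - destruct IH as (l' & H1 & H2). { intros; apply Hp; simpl; auto. }
      destruct (Hs a) as (y & Hy & Hya). { apply Hp; simpl; auto. }
      exists (y :: l'); simpl; split; [congruence|]. intros z [<-|Hz]; auto. }
  exists l'. subst. split; [eapply NoDup_map_inv; eauto|]. rewrite length_map; auto.
Qed.

Lemma tcount_le {X} t (P : X -> Prop) : tcount t P <= t.
Proof. induction t; simpl; auto. destruct excluded_middle_informative; lia. Qed.

Lemma tcount_atleast {X} t (P : X -> Prop) : atleast (tcount t P) P.
Proof. induction t; simpl; [apply atleast_0|]. destruct excluded_middle_informative; auto. Qed.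

Lemma tcount_max {X} t (P : X -> Prop) m : m <= t -> atleast m P -> m <= tcount t P.
Proof.
  induction t; simpl; intros Hm Ha; [lia|].
  destruct excluded_middle_informative as [h|h]; [lia|].
  destruct (Nat.eq_dec m (S t)); [subst; tauto|]. apply IHt; auto; lia.
Qed.

Lemma atleast_iff_tcount {X} t (P : X -> Prop) m : m <= t -> (atleast m P <-> m <= tcount t P).
Proof.
  intros Hm; split; [apply tcount_max; auto|].
  intros H; eapply atleast_le; [apply tcount_atleast|]; eauto.
Qed.

Lemma tcount_ge1 {X} t (P : X -> Prop) : 1 <= t -> (1 <= tcount t P <-> exists x, P x).
Proof. intros Ht. rewrite <- (atleast_iff_tcount t P 1 Ht). apply atleast1. Qed.

Lemma tcount_eq {X Y} t (P : X -> Prop) (Q : Y -> Prop) :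
  (forall m, m <= t -> (atleast m P <-> atleast m Q)) -> tcount t P = tcount t Q.
Proof.
  induction t; simpl; intros H; auto.
  destruct excluded_middle_informative as [h|h];
  destruct excluded_middle_informative as [h'|h']; auto.
  - exfalso; apply h'; apply H; auto.
  - exfalso; apply h; apply H; auto.
Qed.

Lemma tcount_ext {X} t (P Q : X -> Prop) : (forall x, P x <-> Q x) -> tcount t P = tcount t Q.
Proof. intros H; apply tcount_eq; intros; split; apply atleast_imp; firstorder. Qed.

Lemma tcount_full {X} t (P : X -> Prop) : atleast t P -> tcount t P = t.
Proof. intros H. pose proof (tcount_le t P). pose proof (tcount_max t P t (le_n _) H). lia. Qed.

Lemma tcount_empty {X} t (P : X -> Prop) : (forall x, ~ P x) -> tcount t P = 0.
Proof.
  intros H. destruct (tcount_atleast t P) as ([|x l] & _ & Hl & Hp); simpl in Hl; auto.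
  exfalso; apply (H x); apply Hp; simpl; auto.
Qed.

Lemma in_tcount_witness {X} t (P : X -> Prop) l x : tcount t P < t -> NoDup l ->
  length l = tcount t P -> (forall z, In z l -> P z) -> P x -> In x l.
Proof.
  intros Hlt Hn Hl Hp Hx. destruct (classic (In x l)) as [|Hni]; auto. exfalso.
  assert (atleast (S (tcount t P)) P) as Ha.
  { exists (x :: l); split; [constructor; auto|]. split; simpl; [lia|]. intros y [<-|Hy]; auto. }
  apply (tcount_max t) in Ha; lia.
Qed.

Lemma tcount_small_list {X} t (P : X -> Prop) : tcount t P < t ->
  exists l, NoDup l /\ length l = tcount t P /\ forall x, P x <-> In x l.
Proof.
  intros Hlt. destruct (tcount_atleast t P) as (l & Hn & Hl & Hp).
  exists l; repeat split; auto. intros Hx; eapply in_tcount_witness; eauto.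
Qed.

Lemma tcount_list {X} t (P : X -> Prop) l : NoDup l -> (forall x, P x <-> In x l) ->
  tcount t P = Nat.min t (length l).
Proof.
  intros Hn Hl. apply Nat.le_antisymm.
  - pose proof (tcount_le t P). pose proof (tcount_atleast t P) as Ha.
    rewrite (atleast_list P l) in Ha; auto. lia.
  - apply tcount_max; [lia|]. rewrite (atleast_list P l); auto; lia.
Qed.

Lemma tcount_bij {X Y} t (Q : Y -> Prop) (P : X -> Prop) (g : Y -> X) :
  (forall y, Q y -> P (g y)) -> (forall y y', Q y -> Q y' -> g y = g y' -> y = y') ->
  (forall x, P x -> exists y, Q y /\ g y = x) -> tcount t Q = tcount t P.
Proof.
  intros H1 H2 H3. apply tcount_eq; intros m _; split.
  - apply atleast_inj with g; auto.
  - apply atleast_surj with g; auto.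
Qed.

Lemma in_combine_map {X Y} (F : X -> Y) (l : list X) e k :
  In (e, k) (combine l (map F l)) <-> In e l /\ k = F e.
Proof.
  induction l as [|a l IH]; simpl; [tauto|]. rewrite IH. split.
  - intros [H|H]; [inversion H; subst; auto|tauto].
  - intros [[->|H] ->]; auto.
Qed.

Fixpoint bounded_lists (n R : nat) : list (list nat) :=
  match n with
  | 0 => [[]]
  | S n' => flat_map (fun x => map (cons x) (bounded_lists n' R)) (seq 0 (S R))
  end.

Lemma in_bounded_lists n R l :
  In l (bounded_lists n R) <-> length l = n /\ forall x, In x l -> x <= R.
Proof.
  revert l; induction n; intros l; cbn [bounded_lists].
  - split; [intros [<-|[]]; simpl; tauto|]. intros [H _]; destruct l; simpl in *; auto; lia.
  - rewrite in_flat_map. split.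
    + intros (x & Hx & Hl). apply in_map_iff in Hl as (l' & <- & Hl').
      apply IHn in Hl' as [H1 H2]. apply in_seq in Hx. simpl; split; [lia|].
      intros y [<-|Hy]; auto; lia.
    + intros [Hlen Hb]. destruct l as [|x l']; simpl in Hlen; [lia|].
      exists x; split; [apply in_seq; specialize (Hb x (or_introl eq_refl)); lia|].
      apply in_map; apply IHn; split; [lia|]. intros; apply Hb; simpl; auto.
Qed.

Fixpoint type_space (E0 : list (list nat)) (t n : nat) : list (list nat) :=
  match n with
  | 0 => E0
  | S m => bounded_lists (length (type_space E0 t m)) t
  end.

(** * Rooted trees *)

Section Trees.
Variable T : rtree.

Definition up n v := Nat.iter n (tpar T) v.
Definition child (u c : tnode T) := c <> troot T /\ tpar T c = u.
Definition desc n (u v : tnode T) := up n v = u /\ tdepth T v = n + tdepth T u.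

Lemma depth_nonroot x : x <> troot T -> tdepth T x = S (tdepth T (tpar T x)).
Proof. intros H; symmetry; apply tdepth_par; auto. Qed.

Lemma depth0_root x : tdepth T x = 0 -> x = troot T.
Proof.
  intros H. destruct (classic (x = troot T)) as [|Hn]; auto.
  rewrite depth_nonroot in H; auto; lia.
Qed.

Lemma up_S n v : up (S n) v = tpar T (up n v).
Proof. reflexivity. Qed.

Lemma up_add a b v : up (a + b) v = up a (up b v).
Proof. unfold up; apply Nat.iter_add. Qed.

Lemma depth_up j v : j <= tdepth T v -> tdepth T (up j v) = tdepth T v - j.
Proof.
  induction j; intros Hj; [simpl; lia|]. rewrite up_S.
  assert (Hd : tdepth T (up j v) = tdepth T v - j) by (apply IHj; lia).
  assert (up j v <> troot T) as Hn.
  { intros He. rewrite He, tdepth_root in Hd. lia. }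
  rewrite (depth_nonroot _ Hn) in Hd. lia.
Qed.

Lemma up_depth_root v : up (tdepth T v) v = troot T.
Proof. apply depth0_root. rewrite depth_up; lia. Qed.

Lemma desc_0 u v : desc 0 u v <-> v = u.
Proof. unfold desc; simpl; split; [tauto|]. intros ->; auto. Qed.

Lemma desc_S m u v : desc (S m) u v <-> exists c, child u c /\ desc m c v.
Proof.
  unfold desc, child. split.
  - intros [H1 H2]. exists (up m v).
    assert (Hd : tdepth T (up m v) = tdepth T v - m) by (apply depth_up; lia).
    assert (Hn : up m v <> troot T).
    { intros He; rewrite He, tdepth_root in Hd; lia. }
    split; [split; [exact Hn | rewrite <- up_S; exact H1]|]. split; auto. rewrite Hd. lia.
  - intros (c & [Hc Hp] & H1 & H2). split.
    + rewrite up_S, H1; auto.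
    + rewrite H2, (depth_nonroot _ Hc), Hp. lia.
Qed.

Lemma desc_up n u v : desc n u v -> up n v = u.
Proof. intros [H _]; auto. Qed.

Lemma desc_root v : desc (tdepth T v) (troot T) v.
Proof. split; [apply up_depth_root|]. rewrite tdepth_root; lia. Qed.

Lemma desc_depth n u v : desc n u v -> tdepth T v = n + tdepth T u.
Proof. intros [_ H]; auto. Qed.

(** * Threshold types *)

Variable E0 : list (list nat).

(* A type of height [S m] lists, for each candidate type of height [m] in the
   order of [type_space E0 t m], the truncated number of children having it;
   types of height 0 are decorations, drawn from [E0]. *)
Fixpoint ttype (t : nat) (dec : tnode T -> list nat) (n : nat) (u : tnode T) : list nat :=
  match n with
  | 0 => dec u
  | S m => map (fun e => tcount t (fun c => child u c /\ ttype t dec m c = e)) (type_space E0 t m)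
  end.

Lemma ttype_in_space t dec : (forall u, In (dec u) E0) ->
  forall n u, In (ttype t dec n u) (type_space E0 t n).
Proof.
  intros Hd n u; destruct n; simpl; auto. apply in_bounded_lists. rewrite length_map; split; auto.
  intros x Hx; apply in_map_iff in Hx as (e & <- & _). apply tcount_le.
Qed.

Lemma ttype_local t dec1 dec2 n u : (forall v, desc n u v -> dec1 v = dec2 v) ->
  ttype t dec1 n u = ttype t dec2 n u.
Proof.
  revert u; induction n; intros u H; simpl.
  - apply H; apply desc_0; auto.
  - apply map_ext; intros e. apply tcount_ext; intros c. split; intros [Hc He]; split; auto;
    rewrite <- He; [symmetry|]; apply IHn; intros v Hv; apply H; apply desc_S; eauto.
Qed.

Lemma in_ttype_S t dec m u e k :
  In (e, k) (combine (type_space E0 t m) (ttype t dec (S m) u)) <->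
  In e (type_space E0 t m) /\ k = tcount t (fun c => child u c /\ ttype t dec m c = e).
Proof. apply (in_combine_map (fun e => tcount t (fun c => child u c /\ ttype t dec m c = e))). Qed.

Lemma child_in_ttype_S t dec m u c : (forall u, In (dec u) E0) ->
  In (ttype t dec m c, tcount t (fun c' => child u c' /\ ttype t dec m c' = ttype t dec m c))
     (combine (type_space E0 t m) (ttype t dec (S m) u)).
Proof. intros Hd. apply in_ttype_S; split; auto. apply ttype_in_space; auto. Qed.

Fixpoint has_below (t : nat) (Q : list nat -> Prop) (n : nat) (tau : list nat) : Prop :=
  match n with
  | 0 => Q tau
  | S m => exists e k, In (e, k) (combine (type_space E0 t m) tau) /\ 1 <= k /\ has_below t Q m e
  end.

Lemma has_below_ttype t dec Q : 1 <= t -> (forall u, In (dec u) E0) ->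
  forall n u, has_below t Q n (ttype t dec n u) <-> exists v, desc n u v /\ Q (dec v).
Proof.
  intros Ht Hd; induction n; intros u.
  - simpl. split; [intros H; exists u; split; auto; apply desc_0; auto|].
    intros (v & Hv & HQ). apply desc_0 in Hv; subst; auto.
  - cbn [has_below]. split.
    + intros (e & k & Hin & Hk & Hh). apply in_ttype_S in Hin as [He ->].
      apply tcount_ge1 in Hk as (c & Hc & Hce); auto. subst e.
      apply IHn in Hh as (v & Hv & HQ). exists v; split; auto. apply desc_S; eauto.
    + intros (v & Hv & HQ). apply desc_S in Hv as (c & Hc & Hv).
      do 2 eexists. split; [apply (child_in_ttype_S _ _ _ _ c); auto|].
      split; [apply tcount_ge1; eauto|]. apply IHn; eauto.
Qed.

Fixpoint splits_below (t : nat) (Q1 Q2 : list nat -> Prop) (l n : nat) (tau : list nat) : Prop :=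
  match n with
  | 0 => False
  | S m =>
    (l = S m /\ exists e1 k1 e2 k2,
        In (e1, k1) (combine (type_space E0 t m) tau) /\
        In (e2, k2) (combine (type_space E0 t m) tau) /\
        has_below t Q1 m e1 /\ has_below t Q2 m e2 /\
        ((e1 <> e2 /\ 1 <= k1 /\ 1 <= k2) \/ (e1 = e2 /\ 2 <= k1)))
    \/ (l < S m /\ exists e k, In (e, k) (combine (type_space E0 t m) tau) /\ 1 <= k /\
                              splits_below t Q1 Q2 l m e)
  end.

(* [v] and [v'] meet [l] levels above them, i.e. they are at distance [2 * l]. *)
Definition split_pair n u l (Q1 Q2 : list nat -> Prop) (dec : tnode T -> list nat) :=
  exists v v', desc n u v /\ desc n u v' /\ Q1 (dec v) /\ Q2 (dec v') /\ 1 <= l <= n /\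
    up l v = up l v' /\ up (l - 1) v <> up (l - 1) v'.

Section Splits.
Variables (t : nat) (dec : tnode T -> list nat) (Q1 Q2 : list nat -> Prop) (l : nat).
Hypothesis Ht : 2 <= t.
Hypothesis Hdec : forall u, In (dec u) E0.

Lemma two_children_of_types n u e1 k1 e2 k2 :
  In (e1, k1) (combine (type_space E0 t n) (ttype t dec (S n) u)) ->
  In (e2, k2) (combine (type_space E0 t n) (ttype t dec (S n) u)) ->
  (e1 <> e2 /\ 1 <= k1 /\ 1 <= k2) \/ (e1 = e2 /\ 2 <= k1) ->
  exists c1 c2, child u c1 /\ child u c2 /\ c1 <> c2 /\
    ttype t dec n c1 = e1 /\ ttype t dec n c2 = e2.
Proof.
  intros H1 H2 Hk. apply in_ttype_S in H1 as [_ ->]. apply in_ttype_S in H2 as [_ ->].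
  destruct Hk as [(Hne & Hk1 & Hk2)|(<- & Hk)].
  - apply tcount_ge1 in Hk1 as (c1 & ? & ?); [|lia].
    apply tcount_ge1 in Hk2 as (c2 & ? & ?); [|lia].
    exists c1, c2. split; [|split; [|split]]; auto. intros ->; congruence.
  - apply (atleast_iff_tcount t) in Hk; auto.
    apply atleast2_inv in Hk as (c1 & c2 & [? ?] & [? ?] & ?). exists c1, c2; intuition.
Qed.

Lemma splits_below_sound n u :
  splits_below t Q1 Q2 l n (ttype t dec n u) -> split_pair n u l Q1 Q2 dec.
Proof.
  revert u; induction n; intros u; [contradiction|]. cbn [splits_below].
  intros [[-> (e1 & k1 & e2 & k2 & H1 & H2 & Hh1 & Hh2 & Hk)] | [Hl (e & k & Hin & Hk & Hs)]].
  - destruct (two_children_of_types n u e1 k1 e2 k2 H1 H2 Hk)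
      as (c1 & c2 & Hc1 & Hc2 & Hne & <- & <-).
    apply (has_below_ttype t dec Q1) in Hh1 as (v & Hv & Hq1); [|lia|auto].
    apply (has_below_ttype t dec Q2) in Hh2 as (v' & Hv' & Hq2); [|lia|auto].
    exists v, v'. split; [apply desc_S; eauto|]. split; [apply desc_S; eauto|].
    repeat split; auto; try lia.
    + rewrite !up_S, (desc_up _ _ _ Hv), (desc_up _ _ _ Hv').
      destruct Hc1 as [_ ->]; destruct Hc2 as [_ ->]; auto.
    + replace (S n - 1) with n by lia. rewrite (desc_up _ _ _ Hv), (desc_up _ _ _ Hv'); auto.
  - apply in_ttype_S in Hin as [He ->]. apply tcount_ge1 in Hk as (c & Hc & <-); [|lia].
    apply IHn in Hs as (v & v' & Hv & Hv' & Hq1 & Hq2 & Hl' & Hi & Hi').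
    exists v, v'. split; [apply desc_S; eauto|]. split; [apply desc_S; eauto|].
    repeat split; auto; lia.
Qed.

Lemma splits_below_complete n u :
  split_pair n u l Q1 Q2 dec -> splits_below t Q1 Q2 l n (ttype t dec n u).
Proof.
  revert u; induction n; intros u; [intros (v & v' & _ & _ & _ & _ & ? & _); lia|].
  intros (v & v' & Hv & Hv' & Hq1 & Hq2 & Hl & Hi & Hi').
  apply desc_S in Hv as (c1 & Hc1 & Hv). apply desc_S in Hv' as (c2 & Hc2 & Hv').
  cbn [splits_below]. destruct (Nat.eq_dec l (S n)) as [->|Hne].
  - left. split; auto. replace (S n - 1) with n in Hi' by lia.
    rewrite (desc_up _ _ _ Hv), (desc_up _ _ _ Hv') in Hi'.
    do 4 eexists. split; [apply (child_in_ttype_S _ _ _ _ c1); auto|].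
    split; [apply (child_in_ttype_S _ _ _ _ c2); auto|].
    split; [apply has_below_ttype; [lia|auto|]; eauto|].
    split; [apply has_below_ttype; [lia|auto|]; eauto|].
    destruct (list_eq_dec Nat.eq_dec (ttype t dec n c1) (ttype t dec n c2)) as [Heq|Hneq].
    + right; split; auto. apply tcount_max; auto. apply atleast2 with c1 c2; auto.
    + left; split; auto. split; apply tcount_ge1; try lia; eauto.
  - right. split; [lia|].
    assert (c1 = c2) as <-.
    { rewrite <- (desc_up _ _ _ Hv), <- (desc_up _ _ _ Hv').
      replace n with ((n - l) + l) by lia. rewrite !up_add, Hi; auto. }
    do 2 eexists. split; [apply (child_in_ttype_S _ _ _ _ c1); auto|].
    split; [apply tcount_ge1; eauto; lia|].
    apply IHn. exists v, v'. do 4 (split; [auto|]). split; [lia|]. auto.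
Qed.

End Splits.

Lemma splits_below_ttype t dec Q1 Q2 l : 2 <= t -> (forall u, In (dec u) E0) ->
  forall n u, splits_below t Q1 Q2 l n (ttype t dec n u) <-> split_pair n u l Q1 Q2 dec.
Proof.
  intros Ht Hd n u; split; [apply splits_below_sound | apply splits_below_complete]; auto.
Qed.

End Trees.

(** * Matching equinumerous families colour by colour *)

Definition matched {X Y} t' (Yf : Y -> Prop) (Xf : X -> Prop) (g : Y -> X) :=
  (atleast t' Yf /\ atleast t' Xf) \/
  ((forall y, Yf y -> Xf (g y)) /\ (forall y y', Yf y -> Yf y' -> g y = g y' -> y = y') /\
   (forall x, Xf x -> exists y, Yf y /\ g y = x)).

Definition lookup {X Y} (pr : list (Y * X)) (x0 : X) (y : Y) : X :=
  match excluded_middle_informative (exists x, In (y, x) pr) with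
  | left H => proj1_sig (constructive_indefinite_description _ H)
  | right _ => x0
  end.

Lemma in_pairs_fst_inj {X Y} (pr : list (Y * X)) y x x' :
  NoDup (map fst pr) -> In (y, x) pr -> In (y, x') pr -> x = x'.
Proof.
  induction pr as [|[a b] pr IH]; simpl; [tauto|]. intros Hn H1 H2. inversion Hn; subst.
  destruct H1 as [H1|H1]; destruct H2 as [H2|H2]; try congruence.
  - inversion H1; subst. exfalso; apply H3. apply in_map_iff; exists (y, x'); auto.
  - inversion H2; subst. exfalso; apply H3. apply in_map_iff; exists (y, x); auto.
  - eauto.
Qed.

Lemma in_pairs_snd_inj {X Y} (pr : list (Y * X)) y y' x :
  NoDup (map snd pr) -> In (y, x) pr -> In (y', x) pr -> y = y'.
Proof.
  induction pr as [|[a b] pr IH]; simpl; [tauto|]. intros Hn H1 H2. inversion Hn; subst.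
  destruct H1 as [H1|H1]; destruct H2 as [H2|H2]; try congruence.
  - inversion H1; subst. exfalso; apply H3. apply in_map_iff; exists (y', x); auto.
  - inversion H2; subst. exfalso; apply H3. apply in_map_iff; exists (y, x); auto.
  - eauto.
Qed.

Lemma lookup_in {X Y} (pr : list (Y * X)) x0 y x :
  NoDup (map fst pr) -> In (y, x) pr -> lookup pr x0 y = x.
Proof.
  intros Hn Hin. unfold lookup. destruct excluded_middle_informative as [H|H].
  - destruct constructive_indefinite_description as [x' Hx']; simpl.
    eapply in_pairs_fst_inj; eauto.
  - exfalso; eauto.
Qed.

Lemma lookup_out {X Y} (pr : list (Y * X)) x0 y :
  ~ (exists x, In (y, x) pr) -> lookup pr x0 y = x0.
Proof. intros H; unfold lookup; destruct excluded_middle_informative; tauto. Qed.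

Lemma lookup_cases {X Y} (pr : list (Y * X)) x0 y : NoDup (map fst pr) ->
  In (y, lookup pr x0 y) pr \/ (~ (exists x, In (y, x) pr) /\ lookup pr x0 y = x0).
Proof.
  intros Hn. destruct (classic (exists x, In (y, x) pr)) as [[x Hx]|Hno].
  - left. rewrite (lookup_in pr x0 y x); auto.
  - right; split; auto. apply lookup_out; auto.
Qed.

Lemma map_combine_same_length {X Y} (l1 : list Y) (l2 : list X) : length l1 = length l2 ->
  map fst (combine l1 l2) = l1 /\ map snd (combine l1 l2) = l2.
Proof.
  revert l2; induction l1 as [|a l1 IH]; intros [|b l2]; simpl; intros H; try lia;
    try (split; reflexivity).
  destruct (IH l2) as [H1 H2]; [lia|]. rewrite H1, H2; auto.
Qed.

Lemma in_combine_ex_l {X Y} (l1 : list Y) (l2 : list X) y : length l1 = length l2 -> In y l1 ->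
  exists x, In (y, x) (combine l1 l2).
Proof.
  intros Hl Hy. destruct (map_combine_same_length l1 l2 Hl) as [H1 _]. rewrite <- H1 in Hy.
  apply in_map_iff in Hy as ([a b] & Ha & Hin); simpl in Ha; subst; eauto.
Qed.

Lemma in_combine_ex_r {X Y} (l1 : list Y) (l2 : list X) x : length l1 = length l2 -> In x l2 ->
  exists y, In (y, x) (combine l1 l2).
Proof.
  intros Hl Hy. destruct (map_combine_same_length l1 l2 Hl) as [_ H1]. rewrite <- H1 in Hy.
  apply in_map_iff in Hy as ([a b] & Ha & Hin); simpl in Ha; subst; eauto.
Qed.

Lemma length_flat_map_le {A B} (f : A -> list B) l b :
  (forall a, In a l -> length (f a) <= b) -> length (flat_map f l) <= length l * b.
Proof.
  induction l; simpl; intros H; auto. rewrite length_app. pose proof (H a (or_introl eq_refl)).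
  assert (length (flat_map f l) <= length l * b) by (apply IHl; auto). lia.
Qed.

Lemma NoDup_app_disj {Z} (l1 l2 : list Z) a : NoDup (l1 ++ l2) -> In a l1 -> In a l2 -> False.
Proof.
  induction l1 as [|b l1 IH]; simpl; [tauto|]. intros Hn H1 H2.
  inversion Hn as [|? ? Hb Hn']; subst. destruct H1 as [->|H1].
  - apply Hb; apply in_or_app; auto.
  - eauto.
Qed.

Lemma firstn_skipn_disj {Z} (L : list Z) k k' y : NoDup L -> k <= k' -> In y (firstn k L) ->
  In y (skipn k' L) -> False.
Proof.
  intros Hn Hk H1 H2. rewrite <- (firstn_skipn k' L) in Hn.
  assert (In y (firstn k' L)).
  { replace k with (Nat.min k k') in H1 by lia. rewrite <- firstn_firstn in H1.
    eapply in_firstn; eauto. }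
  eapply NoDup_app_disj; eauto.
Qed.

Section Matching.
Context {X Y : Type} (x0 : X) (A : X -> Prop) (B : Y -> Prop) (nk : X -> list nat)
        (K0 : list (list nat)) (t t' : nat).
Hypothesis HK : forall x, A x -> In (nk x) K0.
(* When [A] has [t] elements, some colour class must then have [t'] of them. *)
Hypothesis Ht : S (length K0 * t') <= t.
Hypothesis Ht' : 1 <= t'.
Hypothesis Hc : tcount t A = tcount t B.

Definition fibre s x := A x /\ nk x = s.

Definition colour_matching (g : Y -> X) :=
  (forall y, B y -> A (g y)) /\ forall s, matched t' (fun y => B y /\ nk (g y) = s) (fibre s) g.

Lemma colour_matching_small : tcount t A < t -> exists g, colour_matching g.
Proof.
  intros Hlt. destruct (tcount_small_list t A Hlt) as (lA & HnA & HlA & HA).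
  assert (tcount t B < t) as HltB by lia.
  destruct (tcount_small_list t B HltB) as (lB & HnB & HlB & HB).
  assert (Hlen : length lB = length lA) by lia.
  destruct (map_combine_same_length lB lA Hlen) as [Hf Hs].
  set (pr := combine lB lA) in *.
  assert (Hpr : forall y x, In (y, x) pr -> In y lB /\ In x lA).
  { intros y x H; split; [eapply in_combine_l|eapply in_combine_r]; eauto. }
  exists (lookup pr x0).
  assert (HgB : forall y, B y -> In (y, lookup pr x0 y) pr).
  { intros y Hy. apply HB in Hy. destruct (in_combine_ex_l lB lA y Hlen Hy) as [x Hx].
    rewrite (lookup_in pr x0 y x); auto. rewrite Hf; auto. }
  split.
  - intros y Hy. apply HA. apply (Hpr y). auto.
  - intros s. right. split; [|split].
    + intros y [Hy Hs']. split; auto. apply HA, (Hpr y), HgB; auto.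
    + intros y y' [Hy _] [Hy' _] He. apply (in_pairs_snd_inj pr y y' (lookup pr x0 y)).
      * rewrite Hs; auto.
      * apply HgB; auto.
      * rewrite He; apply HgB; auto.
    + intros x [Hx Hxs]. apply HA in Hx. destruct (in_combine_ex_r lB lA x Hlen Hx) as [y Hy].
      exists y. assert (Hyb : B y) by (apply HB; apply (Hpr y x); auto).
      rewrite (lookup_in pr x0 y x); [split; [split; auto|auto] | rewrite Hf; auto | auto].
Qed.

Section Large.
Variable W : list nat -> list X.
Hypothesis HW1 : forall s, NoDup (W s).
Hypothesis HW2 : forall s, length (W s) = tcount t' (fibre s).
Hypothesis HW3 : forall s x, In x (W s) -> fibre s x.

Lemma length_W_le s : length (W s) <= t'.
Proof. rewrite HW2; apply tcount_le. Qed.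

(* Reserve a block of [t'] elements of [L] for each colour in [K]. *)
Fixpoint pairing (K : list (list nat)) (L : list Y) : list (Y * X) :=
  match K with
  | [] => []
  | s :: K' => combine (firstn (length (W s)) L) (W s) ++ pairing K' (skipn t' L)
  end.

Lemma pairing_spec K : NoDup K -> forall L, NoDup L -> length K * t' <= length L ->
  NoDup (map fst (pairing K L)) /\ NoDup (map snd (pairing K L)) /\
  (forall y x, In (y, x) (pairing K L) -> In y L /\ exists s, In s K /\ In x (W s)) /\
  (forall s x, In s K -> In x (W s) -> exists y, In (y, x) (pairing K L)).
Proof.
  induction K as [|s K IH]; intros HnK L HnL HlL; simpl.
  - split; [constructor|]. split; [constructor|]. split; tauto.
  - inversion HnK as [|? ? Hns HnK']; subst. simpl in HlL.
    pose proof (length_W_le s) as HWs.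
    assert (Hfl : length (firstn (length (W s)) L) = length (W s)) by (rewrite length_firstn; lia).
    destruct (map_combine_same_length _ _ Hfl) as [Hf1 Hf2].
    destruct (IH HnK' (skipn t' L)) as (IH1 & IH2 & IH3 & IH4).
    { apply NoDup_skipn; auto. }
    { rewrite length_skipn; lia. }
    split; [|split; [|split]].
    + rewrite map_app, Hf1. apply NoDup_app; auto.
      * apply NoDup_firstn; auto.
      * intros y Hy1 Hy2. apply in_map_iff in Hy2 as ([y' x] & Heq & Hin); simpl in Heq; subst y'.
        apply IH3 in Hin as [Hin _].
        exact (firstn_skipn_disj L (length (W s)) t' y HnL HWs Hy1 Hin).
    + rewrite map_app, Hf2. apply NoDup_app; auto.
      intros x Hx1 Hx2. apply in_map_iff in Hx2 as ([y x'] & Heq & Hin); simpl in Heq; subst x'.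
      apply IH3 in Hin as [_ (s' & Hs' & Hx')]. apply HW3 in Hx1. apply HW3 in Hx'.
      destruct Hx1 as [_ E1]; destruct Hx' as [_ E2]. subst; congruence.
    + intros y x Hin. apply in_app_or in Hin as [Hin|Hin].
      * split; [eapply in_firstn, in_combine_l; eauto|]. exists s; split; [left; auto|].
        eapply in_combine_r; eauto.
      * apply IH3 in Hin as [H1 (s' & H2 & H3)]. split; [eapply in_skipn; eauto|].
        exists s'; split; [right|]; auto.
    + intros s' x [<-|Hs'] Hx.
      * destruct (in_combine_ex_r _ _ x Hfl Hx) as [y Hy]. exists y; apply in_or_app; auto.
      * destruct (IH4 s' x Hs' Hx) as [y Hy]. exists y; apply in_or_app; auto.
Qed.

Variable K : list (list nat).
Hypothesis HKin : forall s, In s K <-> In s K0.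
Hypothesis HlK : length K <= length K0.

(* Pigeonhole: if no colour had [t'] elements, [A] would have fewer than [t]. *)
Lemma large_colour_exists : tcount t A = t -> exists s0, In s0 K /\ length (W s0) = t'.
Proof.
  intros HtA. apply NNPP; intros Hno.
  assert (Hsm : forall s, In s K -> length (W s) <= t' - 1).
  { intros s Hs. pose proof (length_W_le s).
    destruct (Nat.eq_dec (length (W s)) t'); [exfalso; eauto|lia]. }
  assert (HAin : forall x, A x -> In x (flat_map W K)).
  { intros x Hx. apply in_flat_map. exists (nk x). split; [apply HKin; auto|].
    apply (in_tcount_witness t' (fibre (nk x))); auto.
    - rewrite <- HW2. pose proof (Hsm (nk x) (proj2 (HKin _) (HK x Hx))). lia.
    - split; auto. }
  destruct (tcount_atleast t A) as (LA & HnA & HlA & HA). rewrite HtA in HlA.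
  assert (length LA <= length (flat_map W K)).
  { apply NoDup_incl_length; auto. intros x Hx; apply HAin; auto. }
  pose proof (length_flat_map_le W K (t' - 1) Hsm). nia.
Qed.

Lemma colour_matching_large_with (L : list Y) (x1 : X) s0 :
  NoDup L -> length L = t -> (forall y, In y L -> B y) ->
  NoDup K -> In s0 K -> length (W s0) = t' -> In x1 (W s0) ->
  colour_matching (lookup (pairing K L) x1).
Proof.
  intros HnL HlL HLB HnK Hs0K Hs0l Hx1. unfold colour_matching.
  destruct (pairing_spec K HnK L HnL) as (S1 & S2 & S3 & S4); [rewrite HlL; nia|].
  set (pr := pairing K L) in *. set (g := lookup pr x1).
  assert (HgA : forall y, A (g y)).
  { intros y. unfold g. destruct (lookup_cases pr x1 y S1) as [Hx|[_ ->]].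
    - apply S3 in Hx as [_ (s & _ & Hs)]. apply HW3 in Hs; apply Hs.
    - apply HW3 in Hx1; apply Hx1. }
  split; [intros; auto|]. intros s.
  destruct (classic (In s K /\ length (W s) = t')) as [[HsK Hsl]|Hsmall].
  - left. split; [|exists (W s); split; auto].
    apply atleast_surj with (P := fun x => In x (W s)) (g := g); [|exists (W s); split; auto].
    intros x Hx. destruct (S4 s x HsK Hx) as [y Hy]. exists y.
    unfold g. rewrite (lookup_in pr x1 y x S1 Hy). split; auto.
    split; [apply HLB; apply (S3 y x Hy)|]. apply HW3 in Hx; apply Hx.
  - right. split; [|split].
    + intros y [_ Hy]. split; auto.
    + intros y y' [_ Hy] [_ Hy'] He.
      assert (Hpair : forall z, nk (g z) = s -> In (z, g z) pr).
      { intros z Hz. destruct (lookup_cases pr x1 z S1) as [Hx|[_ Hgx]]; auto.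
        exfalso. apply Hsmall. unfold g in Hz. rewrite Hgx in Hz. apply HW3 in Hx1.
        destruct Hx1 as [_ E]. rewrite <- Hz, E. auto. }
      apply (in_pairs_snd_inj pr y y' (g y)); auto. rewrite He; auto.
    + intros x [Hx Hxs].
      assert (HsK : In s K) by (apply HKin; subst s; apply HK; auto).
      assert (Hlt : tcount t' (fibre s) < t').
      { rewrite <- HW2. pose proof (length_W_le s).
        destruct (Nat.eq_dec (length (W s)) t'); [exfalso; auto|lia]. }
      assert (In x (W s)) as Hxw.
      { apply (in_tcount_witness t' (fibre s)); auto. split; auto. }
      destruct (S4 s x HsK Hxw) as [y Hy]. exists y.
      unfold g. rewrite (lookup_in pr x1 y x S1 Hy). split; auto. split; auto.
      apply HLB; apply (S3 y x Hy).
Qed.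
End Large.

Lemma colour_matching_large : tcount t A = t -> exists g, colour_matching g.
Proof.
  intros HtA.
  destruct (choice (fun s l => NoDup l /\ length l = tcount t' (fibre s) /\
                                 forall x, In x l -> fibre s x))
    as (W & HW); [intros; apply tcount_atleast|].
  set (K := nodup (list_eq_dec Nat.eq_dec) K0).
  assert (HKin : forall s, In s K <-> In s K0) by (intros; apply nodup_In).
  assert (HnK : NoDup K) by apply NoDup_nodup.
  assert (HlK : length K <= length K0).
  { apply NoDup_incl_length; auto. intros s Hs; apply HKin; auto. }
  destruct (large_colour_exists W (fun s => proj1 (HW s)) (fun s => proj1 (proj2 (HW s)))
              (fun s => proj2 (proj2 (HW s))) K HKin HlK HtA) as (s0 & Hs0K & Hs0l).
  destruct (tcount_atleast t B) as (L & HnL & HlL & HLB). rewrite <- Hc, HtA in HlL.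
  eexists. apply (colour_matching_large_with W (fun s => proj1 (HW s))
                   (fun s => proj1 (proj2 (HW s))) (fun s => proj2 (proj2 (HW s))) K HKin HlK L
                   (nth 0 (W s0) x0) s0); auto.
  apply nth_In; lia.
Qed.

Lemma colour_matching_exists : exists g, colour_matching g.
Proof.
  pose proof (tcount_le t A). destruct (Nat.eq_dec (tcount t A) t).
  - apply colour_matching_large; auto.
  - apply colour_matching_small; lia.
Qed.
End Matching.

(* Gluing matchings of the classes [kB = e] yields equal truncated counts: if
   some class is large on both sides, so is the union; otherwise [g] is a
   bijection class by class. *)
Lemma tcount_matched_union {X Y} t' (A : X -> Prop) (B : Y -> Prop)
    (kA : X -> list nat) (kB : Y -> list nat) (nk : X -> list nat) (g : Y -> X) s :
  (forall y, B y -> A (g y) /\ kA (g y) = kB y) ->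
  (forall e, matched t' (fun y => (B y /\ kB y = e) /\ nk (g y) = s)
                        (fun x => (A x /\ kA x = e) /\ nk x = s) g) ->
  tcount t' (fun y => B y /\ nk (g y) = s) = tcount t' (fun x => A x /\ nk x = s).
Proof.
  intros H1 H2.
  destruct (classic (exists e, atleast t' (fun y => (B y /\ kB y = e) /\ nk (g y) = s) /\
                               atleast t' (fun x => (A x /\ kA x = e) /\ nk x = s)))
    as [(e & Ha & Hb)|Hno].
  - rewrite !tcount_full; auto.
    + eapply atleast_imp; [|exact Hb]. simpl; tauto.
    + eapply atleast_imp; [|exact Ha]. simpl; tauto.
  - assert (Hbij : forall e, let Yf := (fun y => (B y /\ kB y = e) /\ nk (g y) = s) in
                             let Xf := (fun x => (A x /\ kA x = e) /\ nk x = s) in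
      (forall y, Yf y -> Xf (g y)) /\ (forall y y', Yf y -> Yf y' -> g y = g y' -> y = y') /\
      (forall x, Xf x -> exists y, Yf y /\ g y = x)).
    { intros e. destruct (H2 e) as [Hb|Hb]; auto. exfalso; apply Hno; eauto. }
    apply tcount_bij with g.
    + intros y [Hy Hs]. split; auto. apply H1; auto.
    + intros y y' [Hy Hs] [Hy' Hs'] He.
      assert (Hk : kB y' = kB y).
      { rewrite <- (proj2 (H1 y' Hy')), <- (proj2 (H1 y Hy)), He; auto. }
      destruct (Hbij (kB y)) as (_ & Hi & _). apply Hi; auto.
    + intros x [Hx Hs]. destruct (Hbij (kA x)) as (_ & _ & Hsu).
      destruct (Hsu x) as (y & [[Hy _] Hys] & Hg); auto. eauto.
Qed.

Lemma matched_ext {X Y} t' (Bf : Y -> Prop) (Xf : X -> Prop) (nk : X -> list nat)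
    (g g' : Y -> X) s :
  (forall y, Bf y -> g y = g' y) ->
  matched t' (fun y => Bf y /\ nk (g' y) = s) Xf g' ->
  matched t' (fun y => Bf y /\ nk (g y) = s) Xf g.
Proof.
  intros He [[H1 H2]|(H1 & H2 & H3)].
  - left; split; auto. eapply atleast_imp; [|exact H1].
    intros y [Hy Hs]; split; auto. rewrite He; auto.
  - right. split; [|split].
    + intros y [Hy Hs]. rewrite He; auto. apply H1. split; auto. rewrite <- He; auto.
    + intros y y' [Hy Hs] [Hy' Hs'] Heq. apply H2; auto.
      * split; auto; rewrite <- He; auto.
      * split; auto; rewrite <- He; auto.
      * rewrite <- !He; auto.
    + intros x Hx. destruct (H3 x Hx) as (y & [Hy Hs] & Hg). exists y. rewrite He; auto.
Qed.

(** * Refining decorations *)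

Definition set_bit {N} (i : nat) (P : N -> Prop) (dec : N -> list nat) (u : N) : list nat :=
  map (fun k => if Nat.eqb k i then indicator (P u) else nth k (dec u) 0) (seq 0 (length (dec u))).

Lemma set_bit_in_bounded_lists {N} L R i (P : N -> Prop) dec : 1 <= R ->
  (forall u, In (dec u) (bounded_lists L R)) ->
  forall u, In (set_bit i P dec u) (bounded_lists L R).
Proof.
  intros HR Hd u. specialize (Hd u). apply in_bounded_lists in Hd as [Hl Hb].
  apply in_bounded_lists. unfold set_bit. rewrite length_map, length_seq. split; auto.
  intros x Hx. apply in_map_iff in Hx as (k & <- & Hk). apply in_seq in Hk.
  destruct (Nat.eqb k i).
  - pose proof (indicator_le1 (P u)); lia.
  - apply Hb, nth_In; lia.
Qed.

Lemma set_bit_ext {N} i (P P' : N -> Prop) dec u :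
  (P u <-> P' u) -> set_bit i P dec u = set_bit i P' dec u.
Proof.
  intros H. unfold set_bit. apply map_ext; intros k. destruct (Nat.eqb k i); auto.
  apply indicator_ext; auto.
Qed.

Lemma nth_map_seq (f : nat -> nat) n k : k < n -> nth k (map f (seq 0 n)) 0 = f k.
Proof.
  intros Hk. rewrite nth_indep with (d' := f 0) by (rewrite length_map, length_seq; auto).
  rewrite map_nth, seq_nth; auto.
Qed.

Lemma nth_set_bit {N} i (P : N -> Prop) dec u :
  i < length (dec u) -> nth i (set_bit i P dec u) 0 = indicator (P u).
Proof.
  intros Hi. unfold set_bit.
  rewrite (nth_map_seq (fun k => if Nat.eqb k i then indicator (P u) else nth k (dec u) 0))
    by auto.
  rewrite Nat.eqb_refl; auto.
Qed.

Lemma map_eq_in {A' B'} (f g : A' -> B') l a : map f l = map g l -> In a l -> f a = g a.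
Proof. induction l; simpl; [tauto|]. intros H [->|Hin]; inversion H; auto. Qed.

Section Refine.
Variables (T1 T2 : rtree) (E0 : list (list nat)) (t t' : nat).
Hypothesis Ht' : 1 <= t'.

Lemma ttype_S_eq_tcount d1 d2 n u1 u2 :
  (forall u, In (d1 u) E0) -> (forall u, In (d2 u) E0) ->
  ttype T1 E0 t d1 (S n) u1 = ttype T2 E0 t d2 (S n) u2 ->
  forall e, tcount t (fun c => child T1 u1 c /\ ttype T1 E0 t d1 n c = e) =
            tcount t (fun c => child T2 u2 c /\ ttype T2 E0 t d2 n c = e).
Proof.
  intros Hd1 Hd2 Heq e. destruct (classic (In e (type_space E0 t n))) as [He|He].
  - exact (map_eq_in _ _ _ _ Heq He).
  - rewrite !tcount_empty; auto; intros c [_ Hc]; apply He; rewrite <- Hc;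
      apply ttype_in_space; auto.
Qed.

Lemma child_matching d1 d2 n u1 u2 (f : tnode T1 -> list nat) :
  S (length (type_space E0 t' n) * t') <= t ->
  (forall u, In (d1 u) E0) -> (forall u, In (d2 u) E0) ->
  (forall c, In (f c) (type_space E0 t' n)) ->
  ttype T1 E0 t d1 (S n) u1 = ttype T2 E0 t d2 (S n) u2 ->
  exists g : tnode T2 -> tnode T1,
    (forall c, child T2 u2 c ->
       child T1 u1 (g c) /\ ttype T1 E0 t d1 n (g c) = ttype T2 E0 t d2 n c) /\
    forall s, tcount t' (fun c => child T2 u2 c /\ f (g c) = s) =
              tcount t' (fun c => child T1 u1 c /\ f c = s).
Proof.
  intros Hth Hd1 Hd2 Hf Heq.
  pose (A e := fun c => child T1 u1 c /\ ttype T1 E0 t d1 n c = e).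
  pose (B e := fun c => child T2 u2 c /\ ttype T2 E0 t d2 n c = e).
  destruct (choice (fun e g => colour_matching (A e) (B e) f t' g)) as (G & HG).
  { intros e. apply (colour_matching_exists (troot T1) (A e) (B e) f (type_space E0 t' n) t t');
      auto.
    apply ttype_S_eq_tcount; auto. }
  exists (fun c => G (ttype T2 E0 t d2 n c) c).
  assert (Hg : forall c, child T2 u2 c ->
            child T1 u1 (G (ttype T2 E0 t d2 n c) c) /\
            ttype T1 E0 t d1 n (G (ttype T2 E0 t d2 n c) c) = ttype T2 E0 t d2 n c).
  { intros c Hc. apply (proj1 (HG _)). split; auto. }
  split; auto. intros s.
  apply (tcount_matched_union t' (child T1 u1) (child T2 u2) (ttype T1 E0 t d1 n)
           (ttype T2 E0 t d2 n) f); auto.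
  intros e. apply matched_ext with (g' := G e).
  - intros y [_ Hy]. rewrite Hy; auto.
  - apply (proj2 (HG e)).
Qed.

Variables (L R i : nat).
Hypothesis HR : 1 <= R.
Hypothesis HE0 : E0 = bounded_lists L R.

(* The back-and-forth step for a quantifier over leaves or sets of leaves. *)
Lemma ttype_refine n : (forall m, m < n -> S (length (type_space E0 t' m) * t') <= t) ->
  forall d1 d2, (forall u, In (d1 u) E0) -> (forall u, In (d2 u) E0) ->
  forall u1 u2, ttype T1 E0 t d1 n u1 = ttype T2 E0 t d2 n u2 ->
  forall P1, exists P2,
    ttype T1 E0 t' (set_bit i P1 d1) n u1 = ttype T2 E0 t' (set_bit i P2 d2) n u2.
Proof.
  intros Hth d1 d2 Hd1 Hd2. induction n; intros u1 u2 Heq P1.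
  - exists (fun _ => P1 u1). simpl in *. unfold set_bit. rewrite Heq. reflexivity.
  - assert (Hsb : forall N (P : N -> Prop) d, (forall u, In (d u) E0) ->
                   forall u, In (set_bit i P d u) E0).
    { intros N P d Hd. rewrite HE0 in *. apply set_bit_in_bounded_lists; auto. }
    set (f := ttype T1 E0 t' (set_bit i P1 d1) n).
    destruct (child_matching d1 d2 n u1 u2 f) as (g & Hg1 & Hg2); auto.
    { intros c. apply ttype_in_space; auto. }
    destruct (choice (fun c P => child T2 u2 c ->
                        f (g c) = ttype T2 E0 t' (set_bit i P d2) n c)) as (Pc & HPc).
    { intros c. destruct (classic (child T2 u2 c)) as [Hc|Hc]; [|exists (fun _ => False); tauto].
      destruct (IHn (fun m Hm => Hth m (Nat.lt_lt_succ_r _ _ Hm)) (g c) c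
                  (proj2 (Hg1 c Hc)) P1) as [P HP].
      exists P; auto. }
    (* Each leaf [w] follows the answer chosen for its ancestor among the children. *)
    exists (fun w => Pc (up T2 n w) w).
    cbn [ttype]. apply map_ext. intros s. rewrite <- Hg2.
    apply tcount_ext. intros c. split; intros [Hc Hs]; split; auto; rewrite <- Hs.
    + rewrite (HPc c Hc). symmetry. apply ttype_local. intros v Hv. apply set_bit_ext.
      rewrite (desc_up _ _ _ _ Hv); tauto.
    + rewrite (HPc c Hc). apply ttype_local. intros v Hv. apply set_bit_ext.
      rewrite (desc_up _ _ _ _ Hv); tauto.
Qed.
End Refine.

(** * Distances between leaves *)

Section Dist.
Variable T : rtree.

Lemma tedge_sym x y : tedge T x y -> tedge T y x.
Proof. unfold tedge; tauto. Qed.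

Lemma twalk_app x y z a b : twalk T x y a -> twalk T y z b -> twalk T x z (a + b).
Proof. induction 1; simpl; auto. intros H'. econstructor; eauto. Qed.

Lemma twalk_snoc x y z n : twalk T x y n -> tedge T y z -> twalk T x z (S n).
Proof.
  intros H He. replace (S n) with (n + 1) by lia. eapply twalk_app; eauto.
  econstructor; eauto. constructor.
Qed.

Lemma twalk_rev x y n : twalk T x y n -> twalk T y x n.
Proof. induction 1; [constructor|]. eapply twalk_snoc; eauto. apply tedge_sym; auto. Qed.

Lemma twalk_up j v : j <= tdepth T v -> twalk T v (up T j v) j.
Proof.
  induction j; intros Hj; [constructor|].
  eapply twalk_snoc; [apply IHj; lia|]. rewrite up_S. left. split; auto.
  intros He. pose proof (depth_up T j v) as Hd. rewrite He, tdepth_root in Hd. lia.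
Qed.

Definition anc_at k x := up T (tdepth T x - k) x.

Lemma anc_at_par k x : x <> troot T -> k <= tdepth T (tpar T x) -> anc_at k (tpar T x) = anc_at k x.
Proof.
  intros Hn Hk. unfold anc_at. rewrite (depth_nonroot T x Hn).
  replace (S (tdepth T (tpar T x)) - k) with ((tdepth T (tpar T x) - k) + 1) by lia.
  rewrite up_add. reflexivity.
Qed.

Lemma tedge_depth x y : tedge T x y ->
  (x <> troot T /\ y = tpar T x /\ tdepth T x = S (tdepth T y)) \/
  (y <> troot T /\ x = tpar T y /\ tdepth T y = S (tdepth T x)).
Proof.
  intros [[Hx ->]|[Hy ->]].
  - left; repeat split; auto. apply depth_nonroot; auto.
  - right; repeat split; auto. apply depth_nonroot; auto.
Qed.

Lemma twalk_depth x y m : twalk T x y m -> tdepth T y <= tdepth T x + m.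
Proof. induction 1; [lia|]. apply tedge_depth in H as [(_ & _ & H)|(_ & _ & H)]; lia. Qed.

(* A walk between nodes whose ancestors at depth [k] differ passes above depth [k]. *)
Lemma twalk_length_lb x y m : twalk T x y m -> forall k, k <= tdepth T x -> k <= tdepth T y ->
  anc_at k x <> anc_at k y -> tdepth T x + tdepth T y + 2 <= m + 2 * k.
Proof.
  induction 1 as [x|x y z n He Hw IH]; intros k Hk1 Hk2 Hne; [tauto|].
  apply tedge_depth in He as [(Hx & -> & Hd)|(Hy & -> & Hd)].
  - destruct (Nat.eq_dec k (tdepth T x)) as [->|Hkx].
    + pose proof (twalk_depth _ _ _ Hw). lia.
    + assert (k <= tdepth T (tpar T x)) by lia.
      rewrite <- (anc_at_par k x Hx) in Hne by auto.
      specialize (IH k H Hk2 Hne). lia.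
  - assert (Hk : k <= tdepth T (tpar T y)) by lia.
    rewrite (anc_at_par k y Hy Hk) in Hne.
    specialize (IH k ltac:(lia) Hk2 Hne). lia.
Qed.

Lemma tdist_unique x y n n' : tdist T x y n -> tdist T x y n' -> n = n'.
Proof. intros [H1 H2] [H3 H4]. apply Nat.le_antisymm; auto. Qed.

Lemma tdist_of_split a b D l : tdepth T a = D -> tdepth T b = D -> 1 <= l <= D ->
  up T l a = up T l b -> up T (l - 1) a <> up T (l - 1) b -> tdist T a b (2 * l).
Proof.
  intros Ha Hb Hl Hi Hi'. split.
  - replace (2 * l) with (l + l) by lia. eapply twalk_app; [apply twalk_up; lia|].
    rewrite Hi. apply twalk_rev, twalk_up; lia.
  - intros m Hm. assert (HH := twalk_length_lb _ _ _ Hm (D - l + 1) ltac:(lia) ltac:(lia)).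
    unfold anc_at in HH. rewrite Ha, Hb in HH.
    replace (D - (D - l + 1)) with (l - 1) in HH by lia.
    specialize (HH Hi'). lia.
Qed.

Lemma split_exists a b D : tdepth T a = D -> tdepth T b = D -> a <> b ->
  exists l, 1 <= l <= D /\ up T l a = up T l b /\ up T (l - 1) a <> up T (l - 1) b.
Proof.
  intros Ha Hb Hne.
  assert (HD : up T D a = up T D b).
  { rewrite <- Ha at 1. rewrite up_depth_root. rewrite <- Hb. rewrite up_depth_root. auto. }
  enough (Hg : forall j, j <= D -> up T j a = up T j b ->
            exists l, 1 <= l <= j /\ up T l a = up T l b /\ up T (l - 1) a <> up T (l - 1) b).
  { destruct (Hg D (le_n _) HD) as (l & ? & ? & ?). exists l; auto. }
  induction j; intros Hj He; [simpl in He; tauto|].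
  destruct (classic (up T j a = up T j b)) as [He'|He'].
  - destruct (IHj ltac:(lia) He') as (l & ? & ? & ?). exists l; split; [lia|auto].
  - exists (S j); split; [lia|]. split; auto. replace (S j - 1) with j by lia. auto.
Qed.

Lemma tdist_split a b D l : tdepth T a = D -> tdepth T b = D -> 1 <= l ->
  (tdist T a b (2 * l) <->
   (1 <= l <= D /\ up T l a = up T l b /\ up T (l - 1) a <> up T (l - 1) b)).
Proof.
  intros Ha Hb Hl. split.
  - intros Hd. assert (a <> b) as Hne.
    { intros ->. destruct Hd as [_ Hm]. specialize (Hm 0 (twalk_nil _ _)). lia. }
    destruct (split_exists a b D Ha Hb Hne) as (l' & H1 & H2 & H3).
    pose proof (tdist_of_split a b D l' Ha Hb H1 H2 H3) as Hd'.
    pose proof (tdist_unique _ _ _ _ Hd Hd'). assert (l = l') by lia. subst; auto.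
  - intros (H1 & H2 & H3). eapply tdist_of_split; eauto.
Qed.
End Dist.

Lemma sig_eq {A} {P : A -> Prop} (x y : {a : A | P a}) : proj1_sig x = proj1_sig y -> x = y.
Proof. destruct x, y; simpl; intros ->; f_equal; apply proof_irrelevance. Qed.

(** * Decorating a tree model with an assignment *)

Definition deco_space (r B : nat) := bounded_lists (S (B + B)) (S r).

Section Decoration.
Variables (r d : nat) (M : tree_model r d) (B : nat).
Let T := tm_tree M.
Let V := gV (tm_graph M).

Lemma leaf_depth x : is_leaf T x -> tdepth T x = d.
Proof. apply tm_leaf_depth. Qed.

Lemma depth_leaf x : tdepth T x = d -> is_leaf T x.
Proof.
  intros Hx y Hy Hp. pose proof (tm_depth_le _ _ M y) as H.
  fold T in H. rewrite (depth_nonroot T y Hy), Hp in H. lia.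
Qed.

Lemma desc_root_leaf v : desc T d (troot T) v <-> is_leaf T v.
Proof.
  split.
  - intros [_ H]. apply depth_leaf. rewrite H, tdepth_root; lia.
  - intros H. pose proof (leaf_depth v H) as Hd. rewrite <- Hd. apply desc_root.
Qed.

(* Entry 0 is the label; entry [1 + x] marks the value of the element
   variable [x], entry [1 + B + X] the members of the set variable [X], for
   variables below [B]. *)
Definition deco_entry (rho : nat -> option V) (sg : nat -> V -> Prop) (k : nat) (u : tnode T)
    : nat :=
  match k with
  | 0 => tm_lab M u
  | S k' => if k' <? B then indicator (exists a, rho k' = Some a /\ proj1_sig a = u)
            else indicator (exists h : is_leaf T u, sg (k' - B) (exist _ u h))
  end.

Definition deco rho sg (u : tnode T) : list nat :=
  map (fun k => deco_entry rho sg k u) (seq 0 (S (B + B))).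

Lemma lab_le u : tm_lab M u <= S r.
Proof.
  destruct (classic (is_leaf T u)) as [H|H].
  - pose proof (tm_lab_leaf _ _ M u H); lia.
  - rewrite (tm_lab_internal _ _ M u H); lia.
Qed.

Lemma length_deco rho sg u : length (deco rho sg u) = S (B + B).
Proof. unfold deco; rewrite length_map, length_seq; auto. Qed.

Lemma deco_in_space rho sg u : In (deco rho sg u) (deco_space r B).
Proof.
  apply in_bounded_lists. rewrite length_deco. split; auto.
  intros x Hx. apply in_map_iff in Hx as (k & <- & _). destruct k; simpl.
  - apply lab_le.
  - destruct (k <? B);
      match goal with |- indicator ?P <= _ => pose proof (indicator_le1 P) end; lia.
Qed.

Lemma nth_deco rho sg k u : k < S (B + B) -> nth k (deco rho sg u) 0 = deco_entry rho sg k u.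
Proof. intros; unfold deco; apply (nth_map_seq (fun k => deco_entry rho sg k u)); auto. Qed.

Lemma nth_deco_lab rho sg u : nth 0 (deco rho sg u) 0 = tm_lab M u.
Proof. rewrite nth_deco by lia. reflexivity. Qed.

Lemma nth_deco_var rho sg x u : x < B ->
  (nth (S x) (deco rho sg u) 0 = 1 <-> exists a, rho x = Some a /\ proj1_sig a = u).
Proof.
  intros Hx. rewrite nth_deco by lia. simpl.
  replace (x <? B) with true by (symmetry; apply Nat.ltb_lt; auto). apply indicator_eq1.
Qed.

Lemma nth_deco_set rho sg X u : X < B ->
  (nth (S (B + X)) (deco rho sg u) 0 = 1 <-> exists h : is_leaf T u, sg X (exist _ u h)).
Proof.
  intros Hx. rewrite nth_deco by lia. simpl.
  replace (B + X <? B) with false by (symmetry; apply Nat.ltb_ge; lia).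
  replace (B + X - B) with X by lia. apply indicator_eq1.
Qed.

Lemma deco_upd rho sg x v u : x < B ->
  deco (upd rho x v) sg u = set_bit (S x) (fun w => proj1_sig v = w) (deco rho sg) u.
Proof.
  intros Hx. unfold set_bit. rewrite length_deco.
  unfold deco at 1. apply map_ext_in. intros k Hk. apply in_seq in Hk.
  destruct (Nat.eqb k (S x)) eqn:E.
  - apply Nat.eqb_eq in E; subst k. simpl.
    replace (x <? B) with true by (symmetry; apply Nat.ltb_lt; auto).
    apply indicator_ext. unfold upd. rewrite Nat.eqb_refl. split.
    + intros (a & Ha & <-). inversion Ha; auto.
    + intros <-. eauto.
  - rewrite nth_deco by lia. destruct k; simpl; auto. destruct (k <? B); auto.
    apply indicator_ext. unfold upd. assert (Nat.eqb k x = false) as ->; [|tauto].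
    apply Nat.eqb_neq. intros ->. rewrite Nat.eqb_refl in E; discriminate.
Qed.

Lemma deco_supd rho sg X P u : X < B ->
  deco rho (supd sg X P) u =
  set_bit (S (B + X)) (fun w => exists h : is_leaf T w, P (exist _ w h)) (deco rho sg) u.
Proof.
  intros Hx. unfold set_bit. rewrite length_deco.
  unfold deco at 1. apply map_ext_in. intros k Hk. apply in_seq in Hk.
  destruct (Nat.eqb k (S (B + X))) eqn:E.
  - apply Nat.eqb_eq in E; subst k. simpl.
    replace (B + X <? B) with false by (symmetry; apply Nat.ltb_ge; lia).
    apply indicator_ext. unfold supd. replace (B + X - B) with X by lia.
    rewrite Nat.eqb_refl. tauto.
  - rewrite nth_deco by lia. destruct k; simpl; auto. destruct (k <? B) eqn:E2; auto.
    apply indicator_ext. unfold supd. assert (Nat.eqb (k - B) X = false) as ->; [|tauto].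
    apply Nat.eqb_neq. apply Nat.ltb_ge in E2. intros Heq. apply Nat.eqb_neq in E. lia.
Qed.

Lemma map_zero (f : nat -> nat) l : (forall k, In k l -> f k = 0) -> map f l = repeat 0 (length l).
Proof. induction l; simpl; intros H; auto. rewrite H by auto. f_equal. apply IHl; auto. Qed.

Lemma deco_empty u :
  deco (fun _ => None) (fun _ _ => False) u = tm_lab M u :: repeat 0 (B + B).
Proof.
  unfold deco. cbn [seq map]. f_equal. rewrite map_zero, length_seq; auto.
  intros k Hk. apply in_seq in Hk. destruct k; [lia|]. simpl. destruct (k <? B).
  - apply indicator_false. intros (a & Ha & _); discriminate.
  - apply indicator_false. intros (h & []).
Qed.

Definition root_type t rho sg := ttype T (deco_space r B) t (deco rho sg) d (troot T).

Section Atomic.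
Variables (t : nat) (rho : nat -> option V) (sg : nat -> V -> Prop).
Hypothesis Ht : 2 <= t.
Let dec := deco rho sg.

Lemma leaf_of_vertex (a : V) : is_leaf T (proj1_sig a).
Proof. exact (proj2_sig a). Qed.

Lemma atom_eq_iff_has_below x y : x < B -> y < B ->
  (atom2 (@eq V) rho x y <->
   has_below (deco_space r B) t (fun tt => nth (S x) tt 0 = 1 /\ nth (S y) tt 0 = 1) d
     (root_type t rho sg)).
Proof.
  intros Hx Hy. unfold root_type. rewrite has_below_ttype; [|lia|apply deco_in_space].
  unfold atom2, dec. split.
  - destruct (rho x) as [a|] eqn:Ea; [|tauto]. destruct (rho y) as [b|] eqn:Eb; [|tauto].
    intros <-. exists (proj1_sig a). split; [apply desc_root_leaf, leaf_of_vertex|].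
    rewrite !nth_deco_var by auto. split; eauto.
  - intros (v & _ & H1 & H2). apply nth_deco_var in H1 as (a & Ha & Hav); auto.
    apply nth_deco_var in H2 as (b & Hb & Hbv); auto. rewrite Ha, Hb. apply sig_eq; congruence.
Qed.

Lemma atom_in_iff_has_below x X : x < B -> X < B ->
  ((match rho x with Some a => sg X a | None => False end) <->
   has_below (deco_space r B) t (fun tt => nth (S x) tt 0 = 1 /\ nth (S (B + X)) tt 0 = 1) d
     (root_type t rho sg)).
Proof.
  intros Hx HX. unfold root_type. rewrite has_below_ttype; [|lia|apply deco_in_space].
  unfold dec. split.
  - destruct (rho x) as [a|] eqn:Ea; [|tauto]. intros Ha.
    exists (proj1_sig a). split; [apply desc_root_leaf, leaf_of_vertex|].
    rewrite nth_deco_var, nth_deco_set by auto. split; eauto.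
    exists (proj2_sig a). destruct a; simpl; auto.
  - intros (v & _ & H1 & H2). apply nth_deco_var in H1 as (a & Ha & Hav); auto.
    apply nth_deco_set in H2 as (h & Hh); auto. rewrite Ha.
    replace a with (exist (fun x => is_leaf T x) v h); auto. apply sig_eq; simpl; auto.
Qed.

Lemma atom_adj_iff_splits_below x y : x < B -> y < B ->
  (atom2 (gE (tm_graph M)) rho x y <->
   exists l i j, tm_S M i j l /\
     splits_below (deco_space r B) t (fun tt => nth (S x) tt 0 = 1 /\ nth 0 tt 0 = i)
                                     (fun tt => nth (S y) tt 0 = 1 /\ nth 0 tt 0 = j) l d
                                     (root_type t rho sg)).
Proof.
  intros Hx Hy. unfold root_type, atom2.
  setoid_rewrite splits_below_ttype; [|auto|apply deco_in_space].
  split.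
  - destruct (rho x) as [a|] eqn:Ea; [|tauto]. destruct (rho y) as [b|] eqn:Eb; [|tauto].
    simpl. intros (l & Hd & HS).
    pose proof (tm_S_range _ _ M _ _ _ HS) as (_ & _ & Hl).
    exists l, (tm_lab M (proj1_sig a)), (tm_lab M (proj1_sig b)). split; auto.
    apply (tdist_split T _ _ d l (leaf_depth _ (leaf_of_vertex a))
             (leaf_depth _ (leaf_of_vertex b)))
      in Hd as (Hl' & Hi & Hi'); [|lia].
    exists (proj1_sig a), (proj1_sig b). unfold dec.
    split; [apply desc_root_leaf, leaf_of_vertex|]. split; [apply desc_root_leaf, leaf_of_vertex|].
    rewrite !nth_deco_var, !nth_deco_lab by auto.
    split; [split; eauto|]. split; [split; eauto|]. auto.
  - intros (l & i & j & HS & v & v' & Hv & Hv' & [H1 L1] & [H2 L2] & Hl & Hi & Hi').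
    unfold dec in *. rewrite nth_deco_lab in L1, L2.
    apply nth_deco_var in H1 as (a & Ha & <-); auto.
    apply nth_deco_var in H2 as (b & Hb & <-); auto. rewrite Ha, Hb. simpl.
    exists l. split; [|subst; auto].
    apply (tdist_split T _ _ d l (leaf_depth _ (leaf_of_vertex a))
             (leaf_depth _ (leaf_of_vertex b))); [lia|].
    auto.
Qed.
End Atomic.
End Decoration.

(** * Equal root types give MSO equivalence *)

Lemma unique_leaf_transfer (T1 T2 : rtree) E0 t d1 d2 D (Q : list nat -> Prop) : 2 <= t ->
  (forall u, In (d1 u) E0) -> (forall u, In (d2 u) E0) ->
  ttype T1 E0 t d1 D (troot T1) = ttype T2 E0 t d2 D (troot T2) ->
  (forall v v', desc T1 D (troot T1) v -> desc T1 D (troot T1) v' ->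
     Q (d1 v) -> Q (d1 v') -> v = v') ->
  forall w w', desc T2 D (troot T2) w -> desc T2 D (troot T2) w' -> Q (d2 w) -> Q (d2 w') -> w = w'.
Proof.
  intros Ht Hd1 Hd2 Heq Huniq w w' Hw Hw' HQ HQ'. apply NNPP; intros Hne.
  pose proof (desc_depth _ _ _ _ Hw) as Dw. pose proof (desc_depth _ _ _ _ Hw') as Dw'.
  rewrite tdepth_root in Dw, Dw'.
  destruct (split_exists T2 w w' D ltac:(lia) ltac:(lia) Hne) as (l & Hl & Hi & Hi').
  assert (Hs : split_pair T2 D (troot T2) l Q Q d2) by (exists w, w'; auto 7).
  rewrite <- (splits_below_ttype T2 E0 t d2 Q Q l Ht Hd2), <- Heq,
    (splits_below_ttype T1 E0 t d1 Q Q l Ht Hd1) in Hs.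
  destruct Hs as (v & v' & Hv & Hv' & HQv & HQv' & _ & _ & Hne').
  apply Hne'. rewrite (Huniq v v'); auto.
Qed.

Fixpoint mso_rank (p : mso) : nat :=
  match p with
  | MNot a => mso_rank a
  | MAnd a b | MOr a b | MImp a b => Nat.max (mso_rank a) (mso_rank b)
  | MEx _ a | MAll _ a | MExS _ a | MAllS _ a => S (mso_rank a)
  | _ => 0
  end.

Fixpoint mso_vars_below (B : nat) (p : mso) : Prop :=
  match p with
  | MEq x y | MAdj x y | MIn x y => x < B /\ y < B
  | MTrue | MFalse => True
  | MNot a => mso_vars_below B a
  | MAnd a b | MOr a b | MImp a b => mso_vars_below B a /\ mso_vars_below B b
  | MEx x a | MAll x a | MExS x a | MAllS x a => x < B /\ mso_vars_below B a
  end.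

Fixpoint mso_max_var (p : mso) : nat :=
  match p with
  | MEq x y | MAdj x y | MIn x y => Nat.max x y
  | MTrue | MFalse => 0
  | MNot a => mso_max_var a
  | MAnd a b | MOr a b | MImp a b => Nat.max (mso_max_var a) (mso_max_var b)
  | MEx x a | MAll x a | MExS x a | MAllS x a => Nat.max x (mso_max_var a)
  end.

Lemma mso_vars_below_max p B : mso_max_var p < B -> mso_vars_below B p.
Proof.
  induction p; simpl; intros; repeat split; try lia;
    first [apply IHp | apply IHp1 | apply IHp2]; lia.
Qed.

Definition back_and_forth {A1 A2} (R : A1 -> A2 -> Prop) :=
  (forall a1, exists a2, R a1 a2) /\ (forall a2, exists a1, R a1 a2).

Lemma back_and_forth_ex {A1 A2} (R : A1 -> A2 -> Prop) (P1 : A1 -> Prop) (P2 : A2 -> Prop) :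
  back_and_forth R -> (forall a1 a2, R a1 a2 -> (P1 a1 <-> P2 a2)) ->
  ((exists a1, P1 a1) <-> (exists a2, P2 a2)).
Proof.
  intros [H12 H21] HP; split; intros [a Ha];
    [destruct (H12 a) as [b Hb] | destruct (H21 a) as [b Hb]]; exists b; apply (HP _ _ Hb); auto.
Qed.

Lemma back_and_forth_all {A1 A2} (R : A1 -> A2 -> Prop) (P1 : A1 -> Prop) (P2 : A2 -> Prop) :
  back_and_forth R -> (forall a1 a2, R a1 a2 -> (P1 a1 <-> P2 a2)) ->
  ((forall a1, P1 a1) <-> (forall a2, P2 a2)).
Proof.
  intros [H12 H21] HP; split; intros H a;
    [destruct (H21 a) as [b Hb] | destruct (H12 a) as [b Hb]]; apply (HP _ _ Hb); auto.
Qed.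

Section Core.
Variables (r d B : nat).
Let E := deco_space r B.

(* The threshold for rank [S q] must exceed [length K0 * t'] of
   [colour_matching_exists] at every height below [d]. *)
Fixpoint threshold (q : nat) : nat :=
  match q with
  | 0 => 2
  | S q' => S (list_max (map (fun m => length (type_space E (threshold q') m) * threshold q')
                             (seq 0 d))) + 2
  end.

Lemma threshold_ge2 q : 2 <= threshold q.
Proof. destruct q; simpl; lia. Qed.

Lemma threshold_S q m : m < d ->
  S (length (type_space E (threshold q) m) * threshold q) <= threshold (S q).
Proof.
  intros Hm. cbn [threshold].
  set (l := map _ (seq 0 d)).
  assert (length (type_space E (threshold q) m) * threshold q <= list_max l); [|lia].
  assert (Hl : list_max l <= list_max l) by lia. rewrite list_max_le, Forall_forall in Hl.
  apply Hl, in_map_iff. exists m; split; auto. apply in_seq; lia.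
Qed.

Section Steps.
Variables (M1 M2 : tree_model r d) (q : nat).
Let T1 := tm_tree M1.
Let T2 := tm_tree M2.
Variables (rho1 : nat -> option (gV (tm_graph M1))) (sg1 : nat -> gV (tm_graph M1) -> Prop).
Variables (rho2 : nat -> option (gV (tm_graph M2))) (sg2 : nat -> gV (tm_graph M2) -> Prop).
Hypothesis Heq : root_type r d M1 B (threshold (S q)) rho1 sg1 =
                 root_type r d M2 B (threshold (S q)) rho2 sg2.

Lemma refine_root i P1 : i < S (B + B) -> exists P2,
  ttype T1 E (threshold q) (set_bit i P1 (deco r d M1 B rho1 sg1)) d (troot T1) =
  ttype T2 E (threshold q) (set_bit i P2 (deco r d M2 B rho2 sg2)) d (troot T2).
Proof.
  intros Hi. pose proof (threshold_ge2 q).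
  apply (ttype_refine T1 T2 E (threshold (S q)) (threshold q) ltac:(lia) (S (B + B)) (S r) i
           ltac:(lia) eq_refl d (fun m Hm => threshold_S q m Hm));
    [apply deco_in_space | apply deco_in_space | exact Heq].
Qed.

Lemma set_var_step X P1 : X < B -> exists P2,
  root_type r d M1 B (threshold q) rho1 (supd sg1 X P1) =
  root_type r d M2 B (threshold q) rho2 (supd sg2 X P2).
Proof.
  intros HX.
  destruct (refine_root (S (B + X)) (fun w => exists h : is_leaf T1 w, P1 (exist _ w h))
              ltac:(lia)) as [P2 HP2].
  exists (fun a => P2 (proj1_sig a)). unfold root_type.
  etransitivity; [|etransitivity; [exact HP2|]]; apply ttype_local; intros v Hv;
    [apply deco_supd; auto|].
  rewrite deco_supd by auto. apply set_bit_ext.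
  apply desc_root_leaf in Hv. simpl. split; [eauto|]. intros [_ H]; auto.
Qed.

Lemma elem_var_step x (v1 : gV (tm_graph M1)) : x < B -> exists v2,
  root_type r d M1 B (threshold q) (upd rho1 x v1) sg1 =
  root_type r d M2 B (threshold q) (upd rho2 x v2) sg2.
Proof.
  intros Hx. set (P1 := fun w : tnode T1 => proj1_sig v1 = w).
  destruct (refine_root (S x) P1 ltac:(lia)) as [P2 HP2].
  set (d1' := set_bit (S x) P1 (deco r d M1 B rho1 sg1)) in *.
  set (d2' := set_bit (S x) P2 (deco r d M2 B rho2 sg2)) in *.
  assert (G1 : forall u, In (d1' u) E)
    by (intros; apply set_bit_in_bounded_lists; [lia|apply deco_in_space]).
  assert (G2 : forall u, In (d2' u) E)
    by (intros; apply set_bit_in_bounded_lists; [lia|apply deco_in_space]).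
  set (Q := fun tt : list nat => nth (S x) tt 0 = 1).
  assert (HQ1 : forall u, Q (d1' u) <-> P1 u).
  { intros u. unfold Q, d1'. rewrite nth_set_bit by (rewrite length_deco; lia).
    apply indicator_eq1. }
  assert (HQ2 : forall u, Q (d2' u) <-> P2 u).
  { intros u. unfold Q, d2'. rewrite nth_set_bit by (rewrite length_deco; lia).
    apply indicator_eq1. }
  pose proof (threshold_ge2 q) as Htq.
  assert (Hh : has_below E (threshold q) Q d (ttype T1 E (threshold q) d1' d (troot T1))).
  { apply has_below_ttype; auto; [lia|]. exists (proj1_sig v1). split.
    - apply desc_root_leaf, leaf_of_vertex.
    - apply HQ1. reflexivity. }
  pose proof (eq_ind _ (has_below E (threshold q) Q d) Hh _ HP2) as Hh2.
  apply has_below_ttype in Hh2 as (w2 & Hw2 & HQw2); auto; [|lia].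
  assert (Huniq : forall w, desc T2 d (troot T2) w -> P2 w -> w = w2).
  { intros w Hw HPw. apply (unique_leaf_transfer T1 T2 E (threshold q) d1' d2' d Q); auto.
    - intros v v' _ _ Hv Hv'. apply HQ1 in Hv. apply HQ1 in Hv'. unfold P1 in *. congruence.
    - apply HQ2; auto. }
  apply HQ2 in HQw2.
  exists (exist _ w2 (proj1 (desc_root_leaf r d M2 w2) Hw2)). unfold root_type.
  etransitivity; [|etransitivity; [exact HP2|]]; apply ttype_local; intros v Hv;
    [apply deco_upd; auto|].
  rewrite deco_upd by auto. unfold d2'. apply set_bit_ext. simpl.
  split; [intros HP; symmetry; apply Huniq; auto|intros <-; auto].
Qed.
End Steps.

Lemma elem_var_back_and_forth M1 M2 q rho1 sg1 rho2 sg2 x :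
  root_type r d M1 B (threshold (S q)) rho1 sg1 = root_type r d M2 B (threshold (S q)) rho2 sg2 ->
  x < B -> back_and_forth (fun v1 v2 => root_type r d M1 B (threshold q) (upd rho1 x v1) sg1 =
                                        root_type r d M2 B (threshold q) (upd rho2 x v2) sg2).
Proof.
  intros Heq Hx. split; [intros v1; apply elem_var_step; auto|].
  intros v2. destruct (elem_var_step M2 M1 q rho2 sg2 rho1 sg1 (eq_sym Heq) x v2 Hx) as [v1 He].
  eauto.
Qed.

Lemma set_var_back_and_forth M1 M2 q rho1 sg1 rho2 sg2 X :
  root_type r d M1 B (threshold (S q)) rho1 sg1 = root_type r d M2 B (threshold (S q)) rho2 sg2 ->
  X < B -> back_and_forth (fun P1 P2 => root_type r d M1 B (threshold q) rho1 (supd sg1 X P1) =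
                                        root_type r d M2 B (threshold q) rho2 (supd sg2 X P2)).
Proof.
  intros Heq HX. split; [intros P1; apply set_var_step; auto|].
  intros P2. destruct (set_var_step M2 M1 q rho2 sg2 rho1 sg1 (eq_sym Heq) X P2 HX) as [P1 He].
  eauto.
Qed.

Lemma root_type_mso_equiv (M1 M2 : tree_model r d)
    (HS : forall i j l, tm_S M1 i j l <-> tm_S M2 i j l) p :
  mso_vars_below B p -> forall q, mso_rank p <= q -> forall rho1 sg1 rho2 sg2,
  root_type r d M1 B (threshold q) rho1 sg1 = root_type r d M2 B (threshold q) rho2 sg2 ->
  (mso_sat (tm_graph M1) rho1 sg1 p <-> mso_sat (tm_graph M2) rho2 sg2 p).
Proof.
  induction p; simpl; intros Hv q Hq rho1 sg1 rho2 sg2 Heq; pose proof (threshold_ge2 q) as Ht.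
  10-13: destruct q as [|q]; [lia|]; destruct Hv as [Hn Hv].
  - rewrite (atom_eq_iff_has_below r d M1 B (threshold q) rho1 sg1 Ht n n0),
      (atom_eq_iff_has_below r d M2 B (threshold q) rho2 sg2 Ht n n0), Heq by tauto. tauto.
  - rewrite (atom_adj_iff_splits_below r d M1 B (threshold q) rho1 sg1 Ht n n0),
      (atom_adj_iff_splits_below r d M2 B (threshold q) rho2 sg2 Ht n n0), Heq by tauto.
    split; intros (l & i & j & H1 & H2); exists l, i, j; split; auto; apply HS; auto.
  - rewrite (atom_in_iff_has_below r d M1 B (threshold q) rho1 sg1 Ht n n0),
      (atom_in_iff_has_below r d M2 B (threshold q) rho2 sg2 Ht n n0), Heq by tauto. tauto.
  - tauto.
  - tauto.
  - rewrite (IHp Hv q Hq rho1 sg1 rho2 sg2 Heq). tauto.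
  - rewrite (IHp1 (proj1 Hv) q ltac:(lia) rho1 sg1 rho2 sg2 Heq),
            (IHp2 (proj2 Hv) q ltac:(lia) rho1 sg1 rho2 sg2 Heq). tauto.
  - rewrite (IHp1 (proj1 Hv) q ltac:(lia) rho1 sg1 rho2 sg2 Heq),
            (IHp2 (proj2 Hv) q ltac:(lia) rho1 sg1 rho2 sg2 Heq). tauto.
  - rewrite (IHp1 (proj1 Hv) q ltac:(lia) rho1 sg1 rho2 sg2 Heq),
            (IHp2 (proj2 Hv) q ltac:(lia) rho1 sg1 rho2 sg2 Heq). tauto.
  - apply (back_and_forth_ex _ _ _ (elem_var_back_and_forth M1 M2 q rho1 sg1 rho2 sg2 n Heq Hn)).
    intros v1 v2. apply IHp; auto; lia.
  - apply (back_and_forth_all _ _ _ (elem_var_back_and_forth M1 M2 q rho1 sg1 rho2 sg2 n Heq Hn)).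
    intros v1 v2. apply IHp; auto; lia.
  - apply (back_and_forth_ex _ _ _ (set_var_back_and_forth M1 M2 q rho1 sg1 rho2 sg2 n Heq Hn)).
    intros P1 P2. apply IHp; auto; lia.
  - apply (back_and_forth_all _ _ _ (set_var_back_and_forth M1 M2 q rho1 sg1 rho2 sg2 n Heq Hn)).
    intros P1 P2. apply IHp; auto; lia.
Qed.
End Core.

(** * A finite tree model with the same root type *)

(* Nodes of the canonical tree are paths [(e_k, i_k) :: ... :: (e_1, i_1)] from
   the root: [e_j] is the type of a node of [M] at depth [j], and [i_j] indexes
   its copies, fewer than the truncated count recorded in the parent's type. *)
Section Canon.
Variables (r d : nat) (M : tree_model r d) (B t : nat).
Hypothesis Ht : 1 <= t.
Let T := tm_tree M.
Let E := deco_space r B.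
Let Ef n := type_space E t n.
Let dec0 := deco r d M B (fun _ => None) (fun _ _ => False).
Let tau0 := ttype T E t dec0 d (troot T).

Definition realized n tau := exists u, tdepth T u + n = d /\ ttype T E t dec0 n u = tau.

Lemma realized_child m tau e k : realized (S m) tau -> In (e, k) (combine (Ef m) tau) ->
  1 <= k -> realized m e.
Proof.
  intros (u & Hu & <-) Hin Hk. apply in_ttype_S in Hin as [He ->].
  apply tcount_ge1 in Hk as (c & [Hc Hp] & Hce); auto. exists c. split; auto.
  rewrite (depth_nonroot T c Hc), Hp. lia.
Qed.

Lemma realized_count_le m tau e k : realized (S m) tau -> In (e, k) (combine (Ef m) tau) -> k <= t.
Proof. intros (u & Hu & <-) Hin. apply in_ttype_S in Hin as [He ->]. apply tcount_le. Qed.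

Lemma realized_has_child m tau : realized (S m) tau ->
  exists e k, In (e, k) (combine (Ef m) tau) /\ 1 <= k.
Proof.
  intros (u & Hu & <-).
  assert (Hnl : ~ is_leaf T u).
  { intros Hl. pose proof (leaf_depth r d M u Hl) as H. change (tdepth T u = d) in H. lia. }
  unfold is_leaf in Hnl. apply not_all_ex_not in Hnl as (c & Hc).
  apply imply_to_and in Hc as [Hc Hp]. apply NNPP in Hp.
  do 2 eexists. split; [apply (child_in_ttype_S T E t dec0 m u c); intros; apply deco_in_space|].
  apply tcount_ge1; auto. exists c; split; auto. split; auto.
Qed.

Lemma realized0 tau : realized 0 tau -> exists u, is_leaf T u /\ tau = dec0 u.
Proof. intros (u & Hu & <-). exists u. split; auto. apply (depth_leaf r d M). fold T. lia. Qed.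

Definition code (p : list (list nat * nat)) : list nat :=
  match p with [] => tau0 | (e, _) :: _ => e end.

Fixpoint valid (p : list (list nat * nat)) : Prop :=
  match p with
  | [] => True
  | (e, i) :: p' => valid p' /\ length p' < d /\
      exists k, In (e, k) (combine (Ef (d - S (length p'))) (code p')) /\ i < k
  end.

Lemma valid_realized p : valid p -> length p <= d /\ realized (d - length p) (code p).
Proof.
  induction p as [|[e i] p IH]; simpl.
  - intros _. split; [lia|]. exists (troot T). rewrite tdepth_root. split; [lia|].
    replace (d - 0) with d by lia. reflexivity.
  - intros (Hv & Hl & k & Hin & Hik). destruct (IH Hv) as [_ HR]. split; [lia|].
    replace (d - length p) with (S (d - S (length p))) in HR by lia.
    eapply realized_child; eauto. lia.
Qed.

Lemma valid_tl p : valid p -> valid (tl p).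
Proof. destruct p as [|[e i] p]; simpl; tauto. Qed.

Definition cnode := {p | valid p}.
Definition croot : cnode := exist _ [] I.
Definition cpar (x : cnode) : cnode := exist _ (tl (proj1_sig x)) (valid_tl _ (proj2_sig x)).
Definition cdepth (x : cnode) : nat := length (proj1_sig x).

Lemma cpar_root : cpar croot = croot.
Proof. apply sig_eq; reflexivity. Qed.

Lemma cdepth_root : cdepth croot = 0.
Proof. reflexivity. Qed.

Lemma cdepth_par x : x <> croot -> S (cdepth (cpar x)) = cdepth x.
Proof.
  destruct x as [[|a p] h]; intros Hn; [|reflexivity].
  exfalso; apply Hn; apply sig_eq; reflexivity.
Qed.

Definition canon_tree : rtree := RTree cnode croot cpar cdepth cpar_root cdepth_root cdepth_par.

Lemma canon_leaf (x : cnode) : is_leaf canon_tree x <-> length (proj1_sig x) = d.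
Proof.
  destruct x as [p hp]; simpl. split.
  - intros Hl. destruct (valid_realized p hp) as [Hle HR].
    destruct (Nat.eq_dec (length p) d) as [|Hne]; auto. exfalso.
    replace (d - length p) with (S (d - S (length p))) in HR by lia.
    destruct (realized_has_child _ _ HR) as (e & k & Hin & Hk).
    assert (hy : valid ((e, 0) :: p)) by (simpl; split; auto; split; [lia|]; exists k; split; auto).
    apply (Hl (exist _ _ hy)).
    + intros He. apply (f_equal (@proj1_sig _ _)) in He. discriminate.
    + apply sig_eq; reflexivity.
  - intros Hd y Hy Hp. destruct y as [[|[e i] p'] hy].
    + apply Hy; apply sig_eq; reflexivity.
    + apply (f_equal (@proj1_sig _ _)) in Hp. simpl in Hp.
      pose proof hy as hy'. simpl in hy'. destruct hy' as (_ & Hl & _). rewrite Hp in Hl. lia.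
Qed.

Definition clab (x : cnode) : nat :=
  if Nat.eqb (length (proj1_sig x)) d then nth 0 (code (proj1_sig x)) 0 else S r.

Lemma canon_depth_le (x : tnode canon_tree) : tdepth canon_tree x <= d.
Proof. destruct x as [p h]; apply (valid_realized p h). Qed.

Lemma canon_leaf_depth (x : tnode canon_tree) : is_leaf canon_tree x -> tdepth canon_tree x = d.
Proof. intros H; apply canon_leaf in H; auto. Qed.

Lemma canon_lab_leaf (x : tnode canon_tree) : is_leaf canon_tree x -> 1 <= clab x <= r.
Proof.
  intros H. apply canon_leaf in H. unfold clab. rewrite H, Nat.eqb_refl.
  destruct x as [p hp]; simpl in *. destruct (valid_realized p hp) as [_ HR].
  rewrite H, Nat.sub_diag in HR. apply realized0 in HR as (u & Hu & ->).
  unfold dec0. rewrite nth_deco_lab. apply (tm_lab_leaf _ _ M); auto.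
Qed.

Lemma canon_lab_internal (x : tnode canon_tree) : ~ is_leaf canon_tree x -> clab x = S r.
Proof.
  intros H. unfold clab. destruct (Nat.eqb (length (proj1_sig x)) d) eqn:E'; auto.
  exfalso; apply H; apply canon_leaf; apply Nat.eqb_eq; auto.
Qed.

Definition canon_model : tree_model r d :=
  TreeModel r d canon_tree clab (tm_S M) canon_depth_le canon_leaf_depth canon_lab_leaf
    canon_lab_internal (tm_S_range _ _ M) (tm_S_sym _ _ M).

Let dec0c := deco r d canon_model B (fun _ => None) (fun _ _ => False).

(* Junk value [croot] when [(e, i) :: p] is not a node. *)
Definition cextend (p : list (list nat * nat)) e i : cnode :=
  match excluded_middle_informative (valid ((e, i) :: p)) with
  | left h => exist valid ((e, i) :: p) h
  | right _ => croot
  end.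

Lemma proj1_cextend p e i : valid ((e, i) :: p) -> proj1_sig (cextend p e i) = (e, i) :: p.
Proof. intros Hv. unfold cextend. destruct excluded_middle_informative; tauto. Qed.

Lemma canon_children_count n p (hp : valid p) e k :
  (forall c : cnode, d - length (proj1_sig c) = n ->
     ttype canon_tree E t dec0c n c = code (proj1_sig c)) ->
  d - length p = S n -> In (e, k) (combine (Ef n) (code p)) ->
  tcount t (fun c => child canon_tree (exist _ p hp) c /\ ttype canon_tree E t dec0c n c = e) = k.
Proof.
  intros IH Hn Hk.
  destruct (valid_realized p hp) as [_ (u & Hu & Hcode)]. rewrite Hn in Hcode.
  assert (Hcount : forall k', In (e, k') (combine (Ef n) (code p)) ->
            k' = tcount t (fun c => child T u c /\ ttype T E t dec0 n c = e)).
  { intros k' Hk'. rewrite <- Hcode in Hk'. apply in_ttype_S in Hk' as [_ ->]. auto. }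
  assert (Hval : forall i, valid ((e, i) :: p) <-> i < k).
  { intros i. simpl. replace (d - S (length p)) with n by lia. split.
    - intros (_ & _ & k' & Hk' & Hik). rewrite (Hcount k), <- (Hcount k'); auto.
    - intros Hik. split; auto. split; [lia|]. exists k; auto. }
  rewrite (tcount_list t _ (map (cextend p e) (seq 0 k))).
  - rewrite length_map, length_seq. rewrite (Hcount k Hk). pose proof (tcount_le t
      (fun c => child T u c /\ ttype T E t dec0 n c = e)). lia.
  - apply NoDup_map_on; [apply seq_NoDup|]. intros i j Hi Hj Heq.
    apply in_seq in Hi; apply in_seq in Hj.
    apply (f_equal (@proj1_sig _ _)) in Heq. rewrite !proj1_cextend in Heq by (apply Hval; lia).
    congruence.
  - intros [c hc]. split.
    + intros [[Hc Hp] Hty]. destruct c as [|[e' i] c'].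
      * exfalso; apply Hc; apply sig_eq; reflexivity.
      * apply (f_equal (@proj1_sig _ _)) in Hp. simpl in Hp. subst c'.
        rewrite IH in Hty by (simpl; lia). simpl in Hty. subst e'.
        apply in_map_iff. exists i. split; [|apply in_seq; pose proof (proj1 (Hval i) hc); lia].
        apply sig_eq. rewrite proj1_cextend; auto.
    + intros Hin. apply in_map_iff in Hin as (i & Hmi & Hi). apply in_seq in Hi.
      assert (Hc : c = (e, i) :: p).
      { rewrite <- (proj1_cextend p e i) by (apply Hval; lia). rewrite Hmi. reflexivity. }
      subst c. split; [split|].
      * intros He'. apply (f_equal (@proj1_sig _ _)) in He'. discriminate.
      * apply sig_eq; reflexivity.
      * rewrite IH by (simpl; lia). reflexivity.
Qed.

Lemma canon_ttype n : forall x : cnode, d - length (proj1_sig x) = n ->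
  ttype canon_tree E t dec0c n x = code (proj1_sig x).
Proof.
  induction n; intros [p hp] Hn; simpl in Hn |- *.
  - destruct (valid_realized p hp) as [Hle HR].
    assert (Hd : length p = d) by lia. rewrite Hn in HR.
    apply realized0 in HR as (u & Hu & Hc). unfold dec0c. rewrite deco_empty, Hc.
    unfold dec0. rewrite deco_empty. simpl. unfold clab. simpl.
    rewrite Hd, Nat.eqb_refl, Hc. unfold dec0. rewrite deco_empty. reflexivity.
  - destruct (valid_realized p hp) as [_ (u & Hu & Hcode)]. rewrite Hn in Hcode.
    rewrite <- Hcode. cbn [ttype]. apply map_ext_in. intros e He.
    apply canon_children_count; auto. rewrite <- Hcode. apply in_ttype_S. auto.
Qed.

Fixpoint words {X} (A : list X) (n : nat) : list (list X) :=
  match n with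
  | 0 => [[]]
  | S n' => [] :: flat_map (fun a => map (cons a) (words A n')) A
  end.

Lemma in_words {X} (A : list X) n w :
  length w <= n -> (forall a, In a w -> In a A) -> In w (words A n).
Proof.
  revert w; induction n; intros w Hl Ha; simpl.
  - destruct w; simpl in *; [auto|lia].
  - destruct w as [|a w]; [left; auto|]. right. apply in_flat_map. exists a.
    split; [apply Ha; simpl; auto|]. apply in_map. apply IHn; simpl in *; [lia|auto].
Qed.

Definition alphabet := list_prod (flat_map Ef (seq 0 (S d))) (seq 0 (S t)).

Lemma valid_in_alphabet p : valid p -> forall a, In a p -> In a alphabet.
Proof.
  induction p as [|[e i] p IH]; simpl; [tauto|].
  intros (Hv & Hl & k & Hin & Hik) a [<-|Ha]; auto.
  apply in_prod.
  - apply in_flat_map. exists (d - S (length p)). split; [apply in_seq; lia|].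
    eapply in_combine_l; eauto.
  - apply in_seq. destruct (valid_realized p Hv) as [_ HR].
    replace (d - length p) with (S (d - S (length p))) in HR by lia.
    pose proof (realized_count_le _ _ _ _ HR Hin). lia.
Qed.

Lemma canon_finite : finite_graph (tm_graph canon_model).
Proof.
  exists (flat_map (fun p => match excluded_middle_informative (valid p) with
          | left hv => match excluded_middle_informative (is_leaf canon_tree (exist _ p hv)) with
                       | left hl => [exist (fun x => is_leaf canon_tree x) (exist _ p hv) hl]
                       | right _ => [] end
          | right _ => [] end) (words alphabet d)).
  intros [[p hv] hl]. apply in_flat_map. exists p. split.
  - apply in_words; [apply (valid_realized p hv) | apply valid_in_alphabet; auto].
  - destruct (excluded_middle_informative (valid p)) as [hv'|n]; [|contradiction].
    assert (hv' = hv) by apply proof_irrelevance. subst hv'.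
    destruct (excluded_middle_informative (is_leaf canon_tree (exist _ p hv))) as [hl'|n];
      [|contradiction].
    left. apply sig_eq; reflexivity.
Qed.

Lemma canon_root_type : root_type r d canon_model B t (fun _ => None) (fun _ _ => False) = tau0.
Proof. apply (canon_ttype d croot). simpl; lia. Qed.
End Canon.

Lemma tm_graph_simple r d (M : tree_model r d) : simple_graph (tm_graph M).
Proof.
  split.
  - intros a b (l & [Hw Hm] & HS). exists l. split.
    + split; [apply twalk_rev; auto|]. intros m Hm'. apply Hm, twalk_rev; auto.
    + apply tm_S_sym; auto.
  - intros a (l & [_ Hm] & HS). pose proof (tm_S_range _ _ M _ _ _ HS) as (_ & _ & Hl).
    specialize (Hm 0 (twalk_nil _ _)). lia.
Qed.

Section Iso.
Variables (G H : graph) (f : gV G -> gV H) (g : gV H -> gV G).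
Hypothesis Hgf : forall x, g (f x) = x.
Hypothesis Hfg : forall y, f (g y) = y.
Hypothesis He : forall x y, gE G x y <-> gE H (f x) (f y).

Lemma upd_map rho rho' x v : (forall y, rho' y = option_map f (rho y)) ->
  forall y, upd rho' x (f v) y = option_map f (upd rho x v y).
Proof. intros Hr y. unfold upd. destruct (Nat.eqb y x); auto. Qed.

Lemma supd_map sg sg' X P Q : (forall Y a, sg Y a <-> sg' Y (f a)) -> (forall a, P a <-> Q (f a)) ->
  forall Y a, supd sg X P Y a <-> supd sg' X Q Y (f a).
Proof. intros Hs HPQ Y a. unfold supd. destruct (Nat.eqb Y X); auto. Qed.

Lemma mso_sat_iso p : forall rho sg rho' sg', (forall x, rho' x = option_map f (rho x)) ->
  (forall X a, sg X a <-> sg' X (f a)) -> (mso_sat G rho sg p <-> mso_sat H rho' sg' p).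
Proof.
  induction p; simpl; intros rho sg rho' sg' Hr Hs.
  - unfold atom2. rewrite !Hr. destruct (rho n) as [a|], (rho n0) as [b|]; simpl; try tauto.
    split; [intros ->; auto|]. intros Hab. rewrite <- (Hgf a), <- (Hgf b), Hab; auto.
  - unfold atom2. rewrite !Hr. destruct (rho n) as [a|], (rho n0) as [b|]; simpl; try tauto.
    apply He.
  - rewrite Hr. destruct (rho n); simpl; auto. tauto.
  - tauto.
  - tauto.
  - rewrite (IHp rho sg rho' sg'); tauto.
  - rewrite (IHp1 rho sg rho' sg'), (IHp2 rho sg rho' sg'); tauto.
  - rewrite (IHp1 rho sg rho' sg'), (IHp2 rho sg rho' sg'); tauto.
  - rewrite (IHp1 rho sg rho' sg'), (IHp2 rho sg rho' sg'); tauto.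
  - apply (back_and_forth_ex (fun v w => w = f v)); [split; eauto|].
    intros v w ->. apply IHp; auto. apply upd_map; auto.
  - apply (back_and_forth_all (fun v w => w = f v)); [split; eauto|].
    intros v w ->. apply IHp; auto. apply upd_map; auto.
  - apply (back_and_forth_ex (fun P Q => forall a, P a <-> Q (f a))).
    + split; [intros P; exists (fun b => P (g b)) | intros Q; exists (fun a => Q (f a))];
        intros a; rewrite ?Hgf; tauto.
    + intros P Q HPQ. apply IHp; auto. apply supd_map; auto.
  - apply (back_and_forth_all (fun P Q => forall a, P a <-> Q (f a))).
    + split; [intros P; exists (fun b => P (g b)) | intros Q; exists (fun a => Q (f a))];
        intros a; rewrite ?Hgf; tauto.
    + intros P Q HPQ. apply IHp; auto. apply supd_map; auto.
Qed.
End Iso.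

Lemma mso_models_iso G H p : graph_iso G H -> mso_models G p -> mso_models H p.
Proof.
  intros (f & g & Hgf & Hfg & He).
  apply (mso_sat_iso G H f g Hgf Hfg He); [reflexivity | tauto].
Qed.

Fixpoint fo_to_mso (p : fo) : mso :=
  match p with
  | FEq x y => MEq x y
  | FAdj x y => MAdj x y
  | FTrue => MTrue
  | FFalse => MFalse
  | FNot a => MNot (fo_to_mso a)
  | FAnd a b => MAnd (fo_to_mso a) (fo_to_mso b)
  | FOr a b => MOr (fo_to_mso a) (fo_to_mso b)
  | FImp a b => MImp (fo_to_mso a) (fo_to_mso b)
  | FEx x a => MEx x (fo_to_mso a)
  | FAll x a => MAll x (fo_to_mso a)
  end.

Lemma fo_to_mso_sat G p : forall rho sg, fo_sat G rho p <-> mso_sat G rho sg (fo_to_mso p).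
Proof.
  induction p; simpl; intros rho sg; try tauto.
  - rewrite (IHp rho sg); tauto.
  - rewrite (IHp1 rho sg), (IHp2 rho sg); tauto.
  - rewrite (IHp1 rho sg), (IHp2 rho sg); tauto.
  - rewrite (IHp1 rho sg), (IHp2 rho sg); tauto.
  - split; intros (v & Hv); exists v; [apply (IHp _ sg) | apply (IHp _ sg)]; auto.
  - split; intros Hv v; [apply (IHp _ sg) | apply (IHp _ sg)]; auto.
Qed.

Lemma fo_to_mso_wf p : forall Γ Δ, fo_wf Γ p -> mso_wf Γ Δ (fo_to_mso p).
Proof.
  induction p; simpl; intros; try tauto; auto; split; (apply IHp1 || apply IHp2); tauto.
Qed.

Lemma tm_graph_models_of_finite r d (M : tree_model r d) p :
  (forall G, TMfin r d G -> mso_models G p) -> mso_models (tm_graph M) p.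
Proof.
  intros Hfin. set (B := S (mso_max_var p)). set (t := threshold r d B (mso_rank p)).
  assert (Ht : 1 <= t) by (pose proof (threshold_ge2 r d B (mso_rank p)); unfold t; lia).
  unfold mso_models.
  rewrite (root_type_mso_equiv r d B M (canon_model r d M B t Ht) (fun i j l => iff_refl _) p
             (mso_vars_below_max p B ltac:(unfold B; lia)) _ (le_n _) _ _ _ _
             (eq_sym (canon_root_type r d M B t Ht))).
  apply Hfin. split; [split|].
    + apply tm_graph_simple.
    + exists (canon_model r d M B t Ht), (fun x => x), (fun x => x). repeat split; auto.
    + apply canon_finite.
Qed.

Lemma MSO_theory_TM_fin r d p : MSO_theory (TM r d) p <-> MSO_theory (TMfin r d) p.
Proof.
  split; intros [Hs H]; split; auto.
  - intros G [HG _]. auto.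
  - intros G [_ (M & HM)]. apply (mso_models_iso _ _ p HM), tm_graph_models_of_finite; auto.
Qed.

Theorem corollary10 :
  forall r d : nat,
    (forall φ : fo, FO_theory (TM r d) φ <-> FO_theory (TMfin r d) φ) /\
    (forall φ : mso, MSO_theory (TM r d) φ <-> MSO_theory (TMfin r d) φ).
Proof.
  intros r d. split; [|apply MSO_theory_TM_fin].
  intros p. split; intros [Hs H]; split; auto.
  - intros G [HG _]. auto.
  - intros G HG.
    assert (Hm : MSO_theory (TM r d) (fo_to_mso p)).
    { apply MSO_theory_TM_fin. split; [apply fo_to_mso_wf; auto|]. intros G' HG'.
      apply fo_to_mso_sat, H; auto. }
    apply (fo_to_mso_sat G p _ (fun _ _ => False)), Hm; auto.
Qed.
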